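(* Let $\theta_*(\rho)=\inf\{\theta\geq0:h_{\rho,1}(u(\theta))\leq0\}$ for $\rho>0$. (a) $\theta_*(\rho)=1$ for $\rho>\max_{x>0}\frac{k(1-e^{-x})^{k-1}}{x}$. For $\rho\leq\max_{x>0}\frac{k(1-e^{-x})^{k-1}}{x}$, $\theta_*(\rho)=1-(1-e^{-\lambda_\rho})^k$, where $\lambda_\rho$ is the maximum positive solution of $\rho=\frac{k(1-e^{-\lambda})^{k-1}}{\lambda}$; furthermore, for these $\rho$, $y_2(\theta_*(\rho),\rho)=\frac{k}{f_1(\lambda_\rho)}(1-\theta_*(\rho))$. (b) (I) $y_2(\theta_*(\rho_k),\rho_k)=1-\theta_*(\rho_k)>0$. (II) Writing $\theta_k=\theta_*(\rho_k)$ and $\vec y(\theta)=\vec y(\theta,\rho_k)$, we have $y_1'(\theta_k)<0$ and $y_2'(\theta_k)<0$. (III) There exists $\epsilon>0$ such that $\theta\mapsto\vec y(\theta,\rho_k)$ is twice continuously differentiable when considered on $[0,\theta_k]$ and on $[\theta_k,\theta_k+\epsilon]$ separately.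
   Context: Fix $k\geq3$. Let $f_1(\lambda)=\frac{\lambda(e^\lambda-1)}{e^\lambda-1-\lambda}$ for $\lambda>0$, let $\lambda_k$ be the unique positive solution of $f_1(\lambda)=k$, and $\rho_k=k(1-e^{-\lambda_k})^{k-1}/\lambda_k$. Let $u(\theta)=(1-\theta)^{1/k}$ and $h_{\rho,1}(u)=u-1+\exp(-ku^{k-1}/\rho)$. For $\theta\in[0,1)$ and $\vec x=(x_1,x_2)$ with $x_1\ge -k$, $x_2\ge0$, $\max(x_1,0)+2x_2\le k(1-\theta)$, let $\mathfrak p_0=\frac{\max(x_1,0)}{k(1-\theta)}$, $\mathfrak p_1=\frac{x_2\lambda^2}{k(1-\theta)(e^\lambda-1-\lambda)}$, $\mathfrak p_2=\frac{x_2\lambda}{k(1-\theta)}$, where for $x_2>0$, $\lambda$ is the unique positive solution of $f_1(\lambda)=\frac{k(1-\theta)-\max(x_1,0)}{x_2}$, and for $x_2=0$, $\mathfrak p_1=0$, $\mathfrak p_2=1-\mathfrak p_0$. Let $\vec F(\vec x,\theta)=(-1+(k-1)(\mathfrak p_1-\mathfrak p_0),-(k-1)\mathfrak p_1)$. For $\rho>0$, $\vec y(\theta,\rho)=(y_1,y_2)$ is the (unique) solution for $\theta\in[0,1)$ of $\frac{d\vec y}{d\theta}=\vec F(\vec y(\theta),\theta)$ with initial condition $\vec y(0,\rho)=(ke^{-k/\rho},\rho(1-e^{-k/\rho})-ke^{-k/\rho})$; derivatives $'$ are with respect to $\theta$. *)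

From Stdlib Require Import Reals Lra ClassicalEpsilon.
From Coquelicot Require Import Coquelicot.
Open Scope R_scope.

Definition f1 (l : R) : R := l * (exp l - 1) / (exp l - 1 - l).

Definition lambda_k (k : nat) : R :=
  epsilon (inhabits 0) (fun l => 0 < l /\ f1 l = INR k).

Definition gk (k : nat) (x : R) : R := INR k * (1 - exp (- x)) ^ (k - 1) / x.

Definition rho_k (k : nat) : R := gk k (lambda_k k).

(* max_{x>0} k (1-e^{-x})^{k-1}/x  (the supremum of the values; it is attained) *)
Definition rho_max (k : nat) : R :=
  real (Lub_Rbar (fun r => exists x, 0 < x /\ r = gk k x)).

Definition u (k : nat) (th : R) : R :=
  if Rle_dec (1 - th) 0 then 0 else Rpower (1 - th) (/ INR k).

Definition h1 (k : nat) (rho uu : R) : R :=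
  uu - 1 + exp (- (INR k * uu ^ (k - 1)) / rho).

(* theta_*(rho) = inf { theta >= 0 : h_{rho,1}(u(theta)) <= 0 }, theta restricted
   to [0,1] where u is defined *)
Definition theta_star (k : nat) (rho : R) : R :=
  real (Glb_Rbar (fun th => 0 <= th <= 1 /\ h1 k rho (u k th) <= 0)).

(* the unique positive solution lambda of f_1(lambda) = c (exists iff c > 2);
   for c <= 2 we take the continuous limit value lambda = 0 *)
Definition lam_of (c : R) : R :=
  if Rle_dec c 2 then 0
  else epsilon (inhabits 0) (fun l => 0 < l /\ f1 l = c).

Definition Gl (l : R) : R :=
  if Req_EM_T l 0 then 2 else l ^ 2 / (exp l - 1 - l).

Definition frak_p0 (k : nat) (x1 x2 th : R) : R :=
  Rmax x1 0 / (INR k * (1 - th)).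

Definition frak_p1 (k : nat) (x1 x2 th : R) : R :=
  if Rlt_dec 0 x2 then
    x2 * Gl (lam_of ((INR k * (1 - th) - Rmax x1 0) / x2)) / (INR k * (1 - th))
  else 0.

Definition frak_p2 (k : nat) (x1 x2 th : R) : R :=
  if Rlt_dec 0 x2 then
    x2 * lam_of ((INR k * (1 - th) - Rmax x1 0) / x2) / (INR k * (1 - th))
  else 1 - frak_p0 k x1 x2 th.

Definition F_dom (k : nat) (x1 x2 th : R) : Prop :=
  - INR k <= x1 /\ 0 <= x2 /\ Rmax x1 0 + 2 * x2 <= INR k * (1 - th).

Definition F1 (k : nat) (x1 x2 th : R) : R :=
  -1 + (INR k - 1) * (frak_p1 k x1 x2 th - frak_p0 k x1 x2 th).
Definition F2 (k : nat) (x1 x2 th : R) : R :=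
  - ((INR k - 1) * frak_p1 k x1 x2 th).

(* derivative of f at x relative to the set D (one-sided at endpoints) *)
Definition deriv_within (D : R -> Prop) (f : R -> R) (d x : R) : Prop :=
  forall eps, 0 < eps -> exists delta, 0 < delta /\
    forall t, D t -> Rabs (t - x) < delta ->
      Rabs (f t - f x - d * (t - x)) <= eps * Rabs (t - x).

Definition cont_within (D : R -> Prop) (f : R -> R) (x : R) : Prop :=
  forall eps, 0 < eps -> exists delta, 0 < delta /\
    forall t, D t -> Rabs (t - x) < delta -> Rabs (f t - f x) < eps.

Definition C2_on (a b : R) (f : R -> R) : Prop :=
  exists df ddf : R -> R, forall x, a <= x <= b ->
    deriv_within (fun t => a <= t <= b) f (df x) x /\
    deriv_within (fun t => a <= t <= b) df (ddf x) x /\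
    cont_within (fun t => a <= t <= b) ddf x.

Definition is_y_solution (k : nat) (y1 y2 : R -> R -> R) : Prop :=
  forall rho, 0 < rho ->
    y1 0 rho = INR k * exp (- (INR k / rho)) /\
    y2 0 rho = rho * (1 - exp (- (INR k / rho))) - INR k * exp (- (INR k / rho)) /\
    forall th, 0 <= th < 1 ->
      F_dom k (y1 th rho) (y2 th rho) th /\
      deriv_within (fun t => 0 <= t < 1) (fun t => y1 t rho)
        (F1 k (y1 th rho) (y2 th rho) th) th /\
      deriv_within (fun t => 0 <= t < 1) (fun t => y2 t rho)
        (F2 k (y1 th rho) (y2 th rho) th) th.

From Stdlib Require Import Reals Lra Psatz Classical ClassicalEpsilon.
From Coquelicot Require Import Coquelicot.
Open Scope R_scope.

(* Write [u(theta) = 1 - e^(-x)]. Then [h_(rho,1)(u) <= 0] iff [rho <= gk x], so [theta_star]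
   is [1] when [rho] exceeds [max gk], and is otherwise read off the largest solution
   [lambda_rho] of [gk lambda = rho].  While [y1 > 0] the ODE has the two first integrals
   [lambda (1 - theta)^(-(k-1)/k)] and [y2 e^lambda / (e^lambda - 1 - lambda)], where
   [lambda = f1^(-1)((k (1 - theta) - y1) / y2)]; they give the solution in closed form, with
   [y1 = k u^(k-1) h_(rho,1)(u)], so it is explicit (hence smooth) up to [theta_star], where
   [y1] vanishes and [lambda = lambda_rho].  For [rho = rho_k] this gives [y2 = 1 - theta]
   there, and both right-hand sides are negative because [(k-1) lambda_k < e^lambda_k - 1];
   so [y1] becomes negative, and on [y1 <= 0] the right-hand side is a smooth function of
   [(theta, y2)], which gives the second derivatives past [theta_star]. *)

Ltac solve_derive := apply is_derive_Reals; auto_derive.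

Lemma lt_of_derive_pos (f f' : R -> R) a b : a < b ->
  (forall c, a <= c <= b -> derivable_pt_lim f c (f' c)) ->
  (forall c, a < c < b -> 0 < f' c) -> f a < f b.
Proof.
  intros Hab Hd Hp. destruct (MVT_cor2 f f' a b Hab Hd) as [c [Hc Hc2]].
  specialize (Hp c Hc2). nra.
Qed.

Lemma le_of_derive_nonneg (f f' : R -> R) a b : a <= b ->
  (forall c, a <= c <= b -> derivable_pt_lim f c (f' c)) ->
  (forall c, a < c < b -> 0 <= f' c) -> f a <= f b.
Proof.
  intros Hab Hd Hp. destruct (Req_dec a b) as [->|Hne]; [lra|].
  destruct (MVT_cor2 f f' a b ltac:(lra) Hd) as [c [Hc Hc2]].
  specialize (Hp c Hc2). nra.
Qed.

Lemma exp_opp_mul x : exp x * exp (- x) = 1.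
Proof. rewrite <- exp_plus, Rplus_opp_r. apply exp_0. Qed.

Lemma exp_gt_taylor2 x : 0 < x -> 1 + x + x^2/2 < exp x.
Proof.
  intro Hx.
  enough (1 - 1 - 0 - 0^2/2 < exp x - 1 - x - x^2/2) by lra.
  rewrite <- exp_0 at 1.
  apply (lt_of_derive_pos (fun t => exp t - 1 - t - t^2/2) (fun t => exp t - 1 - t)); [lra| |].
  - intros c _. solve_derive; [auto|field].
  - intros c Hc. pose proof (exp_ineq1 c ltac:(lra)). lra.
Qed.

Lemma exp_gt_taylor3 x : 0 < x -> 1 + x + x^2/2 + x^3/6 < exp x.
Proof.
  intro Hx.
  enough (1 - 1 - 0 - 0^2/2 - 0^3/6 < exp x - 1 - x - x^2/2 - x^3/6) by lra.
  rewrite <- exp_0 at 1.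
  apply (lt_of_derive_pos (fun t => exp t - 1 - t - t^2/2 - t^3/6)
           (fun t => exp t - 1 - t - t^2/2)); [lra| |].
  - intros c _. solve_derive; [auto|field].
  - intros c Hc. pose proof (exp_gt_taylor2 c ltac:(lra)). lra.
Qed.

Lemma exp_sub_exp_opp_gt t : 0 < t -> 2 * t < exp t - exp (- t).
Proof.
  intro Ht.
  enough (Hd : exp 0 - exp (- 0) - 2 * 0 < exp t - exp (- t) - 2 * t)
    by (rewrite Ropp_0, exp_0 in Hd; lra).
  apply (lt_of_derive_pos (fun s => exp s - exp (- s) - 2 * s)
           (fun s => exp s + exp (- s) - 2)); [lra| |].
  - intros c _. solve_derive; [auto|ring].
  - intros c Hc. pose proof (exp_opp_mul c) as E.
    pose proof (exp_pos c). pose proof (exp_pos (- c)).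
    assert (exp c <> exp (- c)).
    { intro He. rewrite He in E. assert (exp (- c) = 1) as E1 by nra.
      rewrite <- exp_0 in E1. apply exp_inv in E1. lra. }
    assert (0 < (exp c - exp (- c))^2) by (apply pow2_gt_0; lra). nra.
Qed.

Lemma exp_sub_1_sub_pos l : 0 < l -> 0 < exp l - 1 - l.
Proof. intro. pose proof (exp_ineq1 l ltac:(lra)). lra. Qed.

Lemma exp_sub_1_pos l : 0 < l -> 0 < exp l - 1.
Proof. intro Hl. pose proof (exp_sub_1_sub_pos l Hl). lra. Qed.

Lemma continuity_pt_of_ex_derive f x : ex_derive f x -> continuity_pt f x.
Proof. intros [l H]. apply derivable_continuous_pt. exists l. apply is_derive_Reals. auto. Qed.

(** * The function [f1] and its inverse [lam_of] *)

Definition df1 (l : R) : R := ((exp l - 1)^2 - l^2 * exp l) / (exp l - 1 - l)^2.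

(* With [e = exp (l/2)]: [exp l - 1 = e (e - 1/e) > e l], i.e. [(exp l - 1)^2 > l^2 exp l]. *)
Lemma df1_numerator_pos l : 0 < l -> 0 < (exp l - 1)^2 - l^2 * exp l.
Proof.
  intro Hl. pose proof (exp_sub_exp_opp_gt (l/2) ltac:(lra)).
  assert (Ee : exp l = exp (l/2) * exp (l/2)) by (rewrite <- exp_plus; f_equal; field).
  pose proof (exp_opp_mul (l/2)).
  pose proof (exp_pos (l/2)). pose proof (exp_pos (-(l/2))).
  assert (exp l - 1 > exp (l/2) * l).
  { rewrite Ee.
    replace (exp (l/2) * exp (l/2) - 1) with (exp (l/2) * (exp (l/2) - exp (-(l/2)))) by nra.
    apply Rmult_lt_compat_l; lra. }
  assert (0 < exp (l/2) * l) by nra.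
  rewrite Ee. nra.
Qed.

Lemma df1_pos l : 0 < l -> 0 < df1 l.
Proof.
  intro Hl. pose proof (exp_sub_1_sub_pos l Hl).
  apply Rdiv_lt_0_compat; [apply df1_numerator_pos; auto|apply pow2_gt_0; lra].
Qed.

Lemma f1_derivable_pt_lim l : 0 < l -> derivable_pt_lim f1 l (df1 l).
Proof.
  intro Hl. pose proof (exp_sub_1_sub_pos l Hl). unfold f1, df1.
  solve_derive; [lra|field; lra].
Qed.

Lemma df1_continuity_pt l : 0 < l -> continuity_pt df1 l.
Proof.
  intro Hl. pose proof (exp_sub_1_sub_pos l Hl). apply continuity_pt_of_ex_derive.
  unfold df1. auto_derive. nra.
Qed.

Lemma f1_continuity_pt l : 0 < l -> continuity_pt f1 l.
Proof. intro. apply derivable_continuous_pt. exists (df1 l). apply f1_derivable_pt_lim; auto. Qed.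

Lemma f1_gt_id l : 0 < l -> l < f1 l.
Proof.
  intro Hl. pose proof (exp_sub_1_sub_pos l Hl). unfold f1.
  apply Rlt_div_r; [lra|]. nra.
Qed.

Lemma f1_gt_2 l : 0 < l -> 2 < f1 l.
Proof.
  intro Hl. pose proof (exp_sub_1_sub_pos l Hl). unfold f1.
  apply Rlt_div_r; [lra|].
  enough (Hd : (0 - 2) * exp 0 + 0 + 2 < (l - 2) * exp l + l + 2)
    by (rewrite exp_0 in Hd; nra).
  apply (lt_of_derive_pos (fun t => (t - 2) * exp t + t + 2) (fun t => (t - 1) * exp t + 1)); auto.
  - intros c _. solve_derive; [auto|ring].
  - intros c Hc. pose proof (exp_ineq1 (- c) ltac:(lra)).
    pose proof (exp_opp_mul c). pose proof (exp_pos c). nra.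
Qed.

Lemma f1_lt_2_add l : 0 < l -> f1 l < 2 + l.
Proof.
  intro Hl. pose proof (exp_sub_1_sub_pos l Hl). pose proof (exp_gt_taylor2 l Hl). unfold f1.
  apply Rlt_div_l; [lra|]. nra.
Qed.

Lemma f1_increasing a b : 0 < a -> a < b -> f1 a < f1 b.
Proof.
  intros Ha Hab. apply (lt_of_derive_pos f1 df1); auto.
  - intros c Hc. apply f1_derivable_pt_lim; lra.
  - intros c Hc. apply df1_pos; lra.
Qed.

Lemma f1_inj a b : 0 < a -> 0 < b -> f1 a = f1 b -> a = b.
Proof.
  intros Ha Hb He. destruct (Rtotal_order a b) as [H|[H|H]]; auto.
  - pose proof (f1_increasing a b Ha H); lra.
  - pose proof (f1_increasing b a Hb H); lra.
Qed.

Lemma f1_surj c : 2 < c -> exists l, 0 < l /\ f1 l = c.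
Proof.
  intro Hc.
  destruct (Ranalysis5.IVT_interv (fun t => f1 t - c) ((c-2)/2) c) as [z [Hz1 Hz2]].
  - intros a Ha. apply continuity_pt_minus; [apply f1_continuity_pt; lra|].
    apply continuity_pt_const. intros ? ?; auto.
  - lra.
  - pose proof (f1_lt_2_add ((c-2)/2) ltac:(lra)). lra.
  - pose proof (f1_gt_id c ltac:(lra)). lra.
  - exists z. split; lra.
Qed.

Lemma lam_of_spec c : 2 < c -> 0 < lam_of c /\ f1 (lam_of c) = c.
Proof.
  intro Hc. unfold lam_of. destruct (Rle_dec c 2); [lra|].
  apply epsilon_spec. destruct (f1_surj c Hc) as [l Hl]. exists l; auto.
Qed.

Lemma lam_of_f1 l : 0 < l -> lam_of (f1 l) = l.
Proof.
  intro Hl. destruct (lam_of_spec (f1 l) (f1_gt_2 l Hl)). apply f1_inj; auto.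
Qed.

Lemma lam_of_increasing x y : 2 < x -> x < y -> lam_of x < lam_of y.
Proof.
  intros Hx Hxy. destruct (lam_of_spec x Hx) as [X1 X2].
  destruct (lam_of_spec y ltac:(lra)) as [Y1 Y2].
  destruct (Rtotal_order (lam_of x) (lam_of y)) as [H|[H|H]]; auto.
  - rewrite H in X2. lra.
  - pose proof (f1_increasing _ _ Y1 H). lra.
Qed.

Lemma lam_of_continuity_pt c : 2 < c -> continuity_pt lam_of c.
Proof.
  intro Hc. set (d := (c - 2)/2).
  destruct (lam_of_spec (c - d) ltac:(unfold d; lra)) as [Ha1 Ha2].
  destruct (lam_of_spec (c + d) ltac:(unfold d; lra)) as [Hb1 Hb2].
  apply (Ranalysis5.continuity_pt_recip_prelim f1 lam_of _ _
           (lam_of_increasing (c - d) (c + d) ltac:(unfold d; lra) ltac:(unfold d; lra))).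
  - intros x y Hx Hxy Hy. apply f1_increasing; lra.
  - intros x Hx. unfold comp, id. apply lam_of_f1. lra.
  - intros a Ha. apply f1_continuity_pt. lra.
  - rewrite Ha2, Hb2. unfold d; lra.
Qed.

Lemma lam_of_derivable_pt_lim c : 2 < c ->
  derivable_pt_lim lam_of c (1 / df1 (lam_of c)).
Proof.
  intro Hc. set (d := (c - 2)/2).
  destruct (lam_of_spec (c - d) ltac:(unfold d; lra)) as [Ha1 _].
  destruct (lam_of_spec c Hc) as [Hl1 _].
  assert (Prf : forall a, lam_of (c - d) <= a <= lam_of (c + d) -> derivable_pt f1 a).
  { intros a Ha. exists (df1 a). apply f1_derivable_pt_lim. lra. }
  assert (Pg : lam_of (c - d) <= lam_of c <= lam_of (c + d)).
  { split; left; apply lam_of_increasing; unfold d; lra. }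
  pose proof (Ranalysis5.derivable_pt_lim_recip_interv f1 lam_of (c - d) (c + d) c Prf
     (lam_of_continuity_pt c Hc) ltac:(unfold d; lra) ltac:(unfold d; lra) Pg) as HR.
  rewrite (derive_pt_eq_0 _ _ _ _ (f1_derivable_pt_lim _ Hl1)) in HR.
  apply HR.
  - intros x Hx. unfold comp, id. apply lam_of_spec. unfold d in *; lra.
  - pose proof (df1_pos _ Hl1). lra.
Qed.

(** * Derivatives and continuity relative to a set *)

Lemma derivable_pt_lim_bound f x l : derivable_pt_lim f x l ->
  forall eps, 0 < eps -> exists delta, 0 < delta /\
    forall y, Rabs (y - x) < delta -> Rabs (f y - f x - l * (y - x)) <= eps * Rabs (y - x).
Proof.
  intros H eps He. destruct (H eps He) as [[delta Hd] Hdl].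
  exists delta. split; auto. intros y Hy.
  destruct (Req_dec y x) as [->|Hne].
  - replace (f x - f x - l * (x - x)) with 0 by ring. rewrite Rabs_R0.
    apply Rmult_le_pos; [lra|apply Rabs_pos].
  - specialize (Hdl (y - x) ltac:(lra) Hy). replace (x + (y - x)) with y in Hdl by ring.
    replace (f y - f x - l * (y - x)) with (((f y - f x) / (y - x) - l) * (y - x))
      by (field; lra).
    rewrite Rabs_mult. apply Rmult_le_compat_r; [apply Rabs_pos|lra].
Qed.

Lemma continuity_pt_bound f x : continuity_pt f x ->
  forall eps, 0 < eps -> exists delta, 0 < delta /\
    forall y, Rabs (y - x) < delta -> Rabs (f y - f x) < eps.
Proof.
  intros H eps He. destruct (H eps He) as [a [Ha Hy]].
  exists a. split; auto. intros y Hyx.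
  destruct (Req_dec y x) as [->|Hne].
  - replace (f x - f x) with 0 by ring. rewrite Rabs_R0. lra.
  - apply (Hy y). split; [split; [exact I|auto]|]. exact Hyx.
Qed.

Section Within.

Variable D : R -> Prop.

Lemma deriv_within_cont_within f d x : deriv_within D f d x -> cont_within D f x.
Proof.
  intros H eps He. destruct (H 1 ltac:(lra)) as [d1 [Hd1 H1]].
  set (M := Rabs d + 1).
  assert (HM : 0 < M) by (unfold M; pose proof (Rabs_pos d); lra).
  exists (Rmin d1 (eps / M)). split.
  { apply Rmin_pos; auto. apply Rdiv_lt_0_compat; auto. }
  intros t Dt Ht.
  assert (Ht1 : Rabs (t - x) < d1) by (eapply Rlt_le_trans; [apply Ht|apply Rmin_l]).
  assert (Ht2 : Rabs (t - x) < eps / M) by (eapply Rlt_le_trans; [apply Ht|apply Rmin_r]).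
  specialize (H1 t Dt Ht1).
  assert (Rabs (f t - f x) <= M * Rabs (t - x)).
  { replace (f t - f x) with ((f t - f x - d * (t - x)) + d * (t - x)) by ring.
    eapply Rle_trans; [apply Rabs_triang|]. rewrite Rabs_mult. unfold M. lra. }
  apply Rlt_div_r in Ht2; auto. lra.
Qed.

Lemma deriv_within_ext f g d x : (forall t, D t -> f t = g t) -> f x = g x ->
  deriv_within D f d x -> deriv_within D g d x.
Proof.
  intros He Hx H eps Heps. destruct (H eps Heps) as [de [Hde Hd]].
  exists de. split; auto. intros t Dt Ht. rewrite <- (He t Dt), <- Hx. auto.
Qed.

Lemma cont_within_ext f g x : (forall t, D t -> f t = g t) -> f x = g x ->
  cont_within D f x -> cont_within D g x.
Proof.
  intros He Hx H eps Heps. destruct (H eps Heps) as [de [Hde Hd]].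
  exists de. split; auto. intros t Dt Ht. rewrite <- (He t Dt), <- Hx. auto.
Qed.

Lemma deriv_within_val f d d' x : d = d' -> deriv_within D f d x -> deriv_within D f d' x.
Proof. intros ->; auto. Qed.

Lemma deriv_within_of_derivable_pt_lim f l x :
  derivable_pt_lim f x l -> deriv_within D f l x.
Proof.
  intros H eps He. destruct (derivable_pt_lim_bound f x l H eps He) as [de [Hde Hd]].
  exists de. split; auto.
Qed.

Lemma cont_within_of_continuity_pt f x : continuity_pt f x -> cont_within D f x.
Proof.
  intros H eps He. destruct (continuity_pt_bound f x H eps He) as [de [Hde Hd]].
  exists de. split; auto.
Qed.

Lemma derivable_pt_lim_of_deriv_within f d x r : 0 < r ->
  (forall t, Rabs (t - x) < r -> D t) ->
  deriv_within D f d x -> derivable_pt_lim f x d.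
Proof.
  intros Hr HD H eps He. destruct (H (eps/2) ltac:(lra)) as [de [Hde Hd]].
  assert (Hp : 0 < Rmin de r) by (apply Rmin_pos; auto).
  exists (mkposreal _ Hp). intros h Hh Hhl. simpl in Hhl.
  assert (H1 : Rabs (x + h - x) < de).
  { replace (x + h - x) with h by ring. eapply Rlt_le_trans; [apply Hhl|apply Rmin_l]. }
  assert (H2 : Rabs (x + h - x) < r).
  { replace (x + h - x) with h by ring. eapply Rlt_le_trans; [apply Hhl|apply Rmin_r]. }
  specialize (Hd (x + h) (HD _ H2) H1). replace (x + h - x) with h in Hd by ring.
  replace ((f (x + h) - f x) / h - d) with ((f (x + h) - f x - d * h) / h) by (field; auto).
  unfold Rdiv. rewrite Rabs_mult, Rabs_inv.
  assert (0 < Rabs h) by (apply Rabs_pos_lt; auto).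
  apply Rmult_le_compat_r with (r := / Rabs h) in Hd; [|left; apply Rinv_0_lt_compat; auto].
  rewrite Rmult_assoc, Rinv_r in Hd; lra.
Qed.

Lemma deriv_within_plus f g a b x : deriv_within D f a x -> deriv_within D g b x ->
  deriv_within D (fun t => f t + g t) (a + b) x.
Proof.
  intros Hf Hg eps He. destruct (Hf (eps/2) ltac:(lra)) as [d1 [Hd1 H1]].
  destruct (Hg (eps/2) ltac:(lra)) as [d2 [Hd2 H2]].
  exists (Rmin d1 d2). split; [apply Rmin_pos; auto|].
  intros t Dt Ht.
  specialize (H1 t Dt (Rlt_le_trans _ _ _ Ht (Rmin_l _ _))).
  specialize (H2 t Dt (Rlt_le_trans _ _ _ Ht (Rmin_r _ _))).
  replace (f t + g t - (f x + g x) - (a + b) * (t - x)) with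
    ((f t - f x - a * (t - x)) + (g t - g x - b * (t - x))) by ring.
  eapply Rle_trans; [apply Rabs_triang|]. lra.
Qed.

Lemma deriv_within_scal f a c x : deriv_within D f a x ->
  deriv_within D (fun t => c * f t) (c * a) x.
Proof.
  intros Hf eps He. set (M := Rabs c + 1).
  assert (HM : 0 < M) by (unfold M; pose proof (Rabs_pos c); lra).
  destruct (Hf (eps/M) ltac:(apply Rdiv_lt_0_compat; auto)) as [d1 [Hd1 H1]].
  exists d1. split; auto. intros t Dt Ht. specialize (H1 t Dt Ht).
  replace (c * f t - c * f x - c * a * (t - x)) with (c * (f t - f x - a * (t - x))) by ring.
  rewrite Rabs_mult.
  apply Rle_trans with (M * (eps / M * Rabs (t - x))).
  - apply Rmult_le_compat; auto using Rabs_pos. unfold M; lra.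
  - right. field. lra.
Qed.

Lemma deriv_within_const c x : deriv_within D (fun _ => c) 0 x.
Proof.
  intros eps He. exists 1. split; [lra|]. intros t _ _.
  replace (c - c - 0 * (t - x)) with 0 by ring. rewrite Rabs_R0.
  apply Rmult_le_pos; [lra|apply Rabs_pos].
Qed.

Lemma deriv_within_comp f g d l x : deriv_within D g d x -> derivable_pt_lim f (g x) l ->
  deriv_within D (fun t => f (g t)) (l * d) x.
Proof.
  intros Hg Hf eps He.
  destruct (Hg 1 ltac:(lra)) as [d1 [Hd1 H1]].
  set (M := Rabs d + 1).
  assert (HM : 0 < M) by (unfold M; pose proof (Rabs_pos d); lra).
  set (L := Rabs l + 1).
  assert (HL : 0 < L) by (unfold L; pose proof (Rabs_pos l); lra).
  destruct (derivable_pt_lim_bound f (g x) l Hf (eps / (2 * M))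
              ltac:(apply Rdiv_lt_0_compat; lra)) as [df [Hdf Hf']].
  destruct (Hg (eps / (2 * L)) ltac:(apply Rdiv_lt_0_compat; lra)) as [d2 [Hd2 H2]].
  assert (Hp : 0 < Rmin (Rmin d1 d2) (df / M)).
  { repeat apply Rmin_pos; auto. apply Rdiv_lt_0_compat; auto. }
  exists (Rmin (Rmin d1 d2) (df / M)). split; auto.
  intros t Dt Ht.
  pose proof (Rmin_l (Rmin d1 d2) (df / M)). pose proof (Rmin_r (Rmin d1 d2) (df / M)).
  pose proof (Rmin_l d1 d2). pose proof (Rmin_r d1 d2).
  specialize (H1 t Dt ltac:(lra)). specialize (H2 t Dt ltac:(lra)).
  assert (Hgb : Rabs (g t - g x) <= M * Rabs (t - x)).
  { replace (g t - g x) with ((g t - g x - d * (t - x)) + d * (t - x)) by ring.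
    eapply Rle_trans; [apply Rabs_triang|]. rewrite Rabs_mult. unfold M. lra. }
  assert (Hgd : Rabs (g t - g x) < df).
  { assert (Htm : Rabs (t - x) < df / M) by lra. apply Rlt_div_r in Htm; auto. lra. }
  specialize (Hf' (g t) Hgd).
  replace (f (g t) - f (g x) - l * d * (t - x)) with
    ((f (g t) - f (g x) - l * (g t - g x)) + l * (g t - g x - d * (t - x))) by ring.
  eapply Rle_trans; [apply Rabs_triang|]. rewrite Rabs_mult.
  assert (eps / (2 * M) * Rabs (g t - g x) <= eps / 2 * Rabs (t - x)).
  { apply Rle_trans with (eps / (2 * M) * (M * Rabs (t - x))).
    - apply Rmult_le_compat_l; auto. left; apply Rdiv_lt_0_compat; lra.
    - right. field. lra. }
  assert (Rabs l * Rabs (g t - g x - d * (t - x)) <= eps / 2 * Rabs (t - x)).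
  { apply Rle_trans with (L * (eps / (2 * L) * Rabs (t - x))).
    - apply Rmult_le_compat; auto using Rabs_pos. unfold L; lra.
    - right. field. lra. }
  lra.
Qed.

(* Products are reduced to squares by polarization: f g = ((f + g)^2 - (f - g)^2) / 4. *)
Lemma deriv_within_mult f g a b x : deriv_within D f a x -> deriv_within D g b x ->
  deriv_within D (fun t => f t * g t) (a * g x + f x * b) x.
Proof.
  intros Hf Hg.
  assert (Sq : forall y, derivable_pt_lim (fun z => z * z) y (2 * y))
    by (intro y; solve_derive; [auto|ring]).
  pose proof (deriv_within_comp _ _ _ _ x (deriv_within_plus _ _ _ _ x Hf Hg) (Sq _)) as H1.
  pose proof (deriv_within_comp _ _ _ _ x
                (deriv_within_plus _ _ _ _ x Hf (deriv_within_scal _ _ (-1) x Hg)) (Sq _)) as H2.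
  pose proof (deriv_within_plus _ _ _ _ x (deriv_within_scal _ _ (/4) x H1)
                (deriv_within_scal _ _ (-/4) x H2)) as H3.
  eapply deriv_within_val; [|eapply deriv_within_ext; [| |apply H3]].
  all: try intros t ?; cbv beta; field.
Qed.

Lemma deriv_within_inv g b x : g x <> 0 -> deriv_within D g b x ->
  deriv_within D (fun t => / g t) (- b / (g x * g x)) x.
Proof.
  intros Hn Hg.
  assert (Hinv : derivable_pt_lim (fun z => / z) (g x) (- / (g x * g x)))
    by (solve_derive; [auto|field; auto]).
  eapply deriv_within_val; [|apply (deriv_within_comp _ g b _ x Hg Hinv)].
  field. auto.
Qed.

Lemma cont_within_plus f g x : cont_within D f x -> cont_within D g x ->
  cont_within D (fun t => f t + g t) x.
Proof.
  intros Hf Hg eps He. destruct (Hf (eps/2) ltac:(lra)) as [d1 [Hd1 H1]].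
  destruct (Hg (eps/2) ltac:(lra)) as [d2 [Hd2 H2]].
  exists (Rmin d1 d2). split; [apply Rmin_pos; auto|].
  intros t Dt Ht.
  specialize (H1 t Dt (Rlt_le_trans _ _ _ Ht (Rmin_l _ _))).
  specialize (H2 t Dt (Rlt_le_trans _ _ _ Ht (Rmin_r _ _))).
  replace (f t + g t - (f x + g x)) with ((f t - f x) + (g t - g x)) by ring.
  eapply Rle_lt_trans; [apply Rabs_triang|]. lra.
Qed.

Lemma cont_within_comp f g x : cont_within D g x -> continuity_pt f (g x) ->
  cont_within D (fun t => f (g t)) x.
Proof.
  intros Hg Hf eps He. destruct (continuity_pt_bound f (g x) Hf eps He) as [d1 [Hd1 H1]].
  destruct (Hg d1 Hd1) as [d2 [Hd2 H2]].
  exists d2. split; auto.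
Qed.

Lemma cont_within_const c x : cont_within D (fun _ => c) x.
Proof. intros eps He. exists 1. split; [lra|]. intros. rewrite Rminus_diag, Rabs_R0. auto. Qed.

Lemma cont_within_scal f c x : cont_within D f x -> cont_within D (fun t => c * f t) x.
Proof.
  intro H. apply (cont_within_comp (fun z => c * z) f x H).
  apply derivable_continuous_pt. exists c. solve_derive; [auto|ring].
Qed.

Lemma cont_within_mult f g x : cont_within D f x -> cont_within D g x ->
  cont_within D (fun t => f t * g t) x.
Proof.
  intros Hf Hg.
  assert (Sq : forall y, continuity_pt (fun z => z * z) y).
  { intro y. apply derivable_continuous_pt. exists (2 * y). solve_derive; [auto|ring]. }
  pose proof (cont_within_comp _ _ x (cont_within_plus _ _ x Hf Hg) (Sq _)) as H1.
  pose proof (cont_within_comp _ _ x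
                (cont_within_plus _ _ x Hf (cont_within_scal _ (-1) x Hg)) (Sq _)) as H2.
  pose proof (cont_within_plus _ _ x (cont_within_scal _ (/4) x H1)
                (cont_within_scal _ (-/4) x H2)) as H3.
  eapply cont_within_ext; [| |apply H3]; intros; cbv beta; field.
Qed.

Lemma cont_within_inv g x : g x <> 0 -> cont_within D g x ->
  cont_within D (fun t => / g t) x.
Proof.
  intros Hn Hg. apply (cont_within_comp (fun z => / z) g x Hg).
  apply derivable_continuous_pt. exists (- / (g x * g x)). solve_derive; [auto|field; auto].
Qed.

End Within.

Lemma deriv_within_subset (D D' : R -> Prop) f d x : (forall t, D' t -> D t) ->
  deriv_within D f d x -> deriv_within D' f d x.
Proof.
  intros Hs H eps Heps. destruct (H eps Heps) as [de [Hde Hd]].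
  exists de. split; auto.
Qed.

(** * The function [gk] and the threshold [theta_star] *)

Lemma INR_ge_3 k : (3 <= k)%nat -> 3 <= INR k.
Proof. intro. replace 3 with (INR 3) by (simpl; ring). apply le_INR; lia. Qed.

Lemma pow_le_one v n : 0 <= v <= 1 -> v ^ n <= 1.
Proof. intro Hv. rewrite <- (pow1 n). apply pow_incr. lra. Qed.

Lemma one_sub_exp_opp_bounds x : 0 < x -> 0 < 1 - exp (- x) < 1 /\ 1 - exp (- x) <= x.
Proof.
  intro Hx. pose proof (exp_pos (-x)). pose proof (exp_ineq1_le (-x)).
  assert (exp (- x) < 1) by (rewrite <- exp_0; apply exp_increasing; lra).
  lra.
Qed.

Lemma gk_pos k x : (1 <= k)%nat -> 0 < x -> 0 < gk k x.
Proof.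
  intros Hk Hx. unfold gk. destruct (one_sub_exp_opp_bounds x Hx) as [[H1 H2] _].
  apply Rdiv_lt_0_compat; auto. apply Rmult_lt_0_compat.
  - apply lt_0_INR. lia.
  - apply pow_lt. auto.
Qed.

Lemma gk_le_div k x : 0 < x -> gk k x <= INR k / x.
Proof.
  intros Hx. unfold gk. destruct (one_sub_exp_opp_bounds x Hx) as [[H1 H2] _].
  pose proof (pow_le_one (1 - exp (-x)) (k-1) ltac:(lra)). pose proof (pos_INR k).
  unfold Rdiv. apply Rmult_le_compat_r; [left; apply Rinv_0_lt_compat; auto|]. nra.
Qed.

Lemma gk_le_mul k x : (3 <= k)%nat -> 0 < x <= 1 -> gk k x <= INR k * x.
Proof.
  intros Hk Hx. unfold gk. destruct (one_sub_exp_opp_bounds x ltac:(lra)) as [[H1 H2] H3].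
  set (v := 1 - exp (- x)) in *.
  replace (k - 1)%nat with (S (S (k - 3))) by lia.
  pose proof (pow_le_one v (k-3) ltac:(lra)). pose proof (pow_le v (k-3) ltac:(lra)).
  pose proof (pos_INR k). simpl.
  apply Rle_div_l; [lra|].
  assert (v * (v * v ^ (k - 3)) <= x * x).
  { apply Rle_trans with (v * v); [|apply Rmult_le_compat; lra].
    apply Rmult_le_compat_l; [lra|]. nra. }
  nra.
Qed.

Lemma gk_continuity_pt k x : 0 < x -> continuity_pt (gk k) x.
Proof.
  intro Hx. apply continuity_pt_of_ex_derive. unfold gk. auto_derive. lra.
Qed.

(* [gk] is small near [0] (at most [k x]) and near infinity (at most [k / x]), so its maximum
   is attained on a compact interval. *)
Lemma gk_has_max k : (3 <= k)%nat ->
  exists xm, 0 < xm /\ forall x, 0 < x -> gk k x <= gk k xm.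
Proof.
  intro Hk. pose proof (INR_ge_3 k Hk) as HK.
  set (g0 := gk k 1). assert (Hg0 : 0 < g0) by (apply gk_pos; [lia|lra]).
  set (a := Rmin 1 (g0 / (2 * INR k))). set (b := Rmax 1 (2 * INR k / g0)).
  assert (Ha : 0 < a <= 1).
  { split; [apply Rmin_pos; [lra|apply Rdiv_lt_0_compat; lra]|apply Rmin_l]. }
  assert (Hb1 : 1 <= b) by apply Rmax_l.
  assert (Hb2 : 2 * INR k / g0 <= b) by apply Rmax_r.
  destruct (continuity_ab_maj (gk k) a b ltac:(lra)) as [xm [Hxm Hxmab]].
  { intros c Hc. apply gk_continuity_pt. lra. }
  assert (Hg0m : g0 <= gk k xm) by (apply Hxm; lra).
  exists xm. split; [lra|]. intros x Hx.
  destruct (Rlt_le_dec x a) as [Hxa|Hxa].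
  - pose proof (gk_le_mul k x Hk ltac:(lra)).
    assert (a <= g0 / (2 * INR k)) by apply Rmin_r.
    assert (INR k * x <= g0 / 2).
    { apply Rle_trans with (INR k * (g0 / (2 * INR k))); [nra|right; field; lra]. }
    lra.
  - destruct (Rle_lt_dec x b) as [Hxb|Hxb]; [apply Hxm; lra|].
    pose proof (gk_le_div k x Hx).
    assert (Hx2 : 2 * INR k / g0 < x) by lra.
    assert (2 * INR k < x * g0) by (apply Rlt_div_l in Hx2; lra).
    assert (INR k / x <= g0 / 2) by (apply Rle_div_l; [lra|nra]).
    lra.
Qed.

Lemma rho_max_spec k : (3 <= k)%nat ->
  (forall x, 0 < x -> gk k x <= rho_max k) /\ exists xm, 0 < xm /\ gk k xm = rho_max k.
Proof.
  intro Hk. destruct (gk_has_max k Hk) as [xm [Hxm Hmax]].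
  assert (Hrm : rho_max k = gk k xm).
  { unfold rho_max. rewrite (is_lub_Rbar_unique _ (Finite (gk k xm))); [reflexivity|].
    split.
    - intros r [x [Hx ->]]. apply Hmax; auto.
    - intros bb Hbb. apply Hbb. exists xm. split; [lra|reflexivity]. }
  rewrite Hrm. split; auto. exists xm. auto.
Qed.

(* [lambda_rho] is the supremum of the superlevel set [{x > 0 | rho <= gk k x}]. *)
Lemma gk_largest_solution k rho : (3 <= k)%nat -> 0 < rho -> rho <= rho_max k ->
  exists L, 0 < L /\ gk k L = rho /\ (forall x, 0 < x -> rho <= gk k x -> x <= L).
Proof.
  intros Hk Hr Hrm. destruct (rho_max_spec k Hk) as [Hub [xm [Hxm Hxm2]]].
  set (S := fun x => 0 < x /\ rho <= gk k x).
  assert (Hb : bound S).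
  { exists (INR k / rho). intros x [Hx Hgx]. pose proof (gk_le_div k x Hx).
    assert (Hkx : rho <= INR k / x) by lra.
    apply Rle_div_r in Hkx; auto. apply Rle_div_r; auto. lra. }
  destruct (completeness S Hb) as [L [HL1 HL2]]; [exists xm; split; auto; lra|].
  assert (HLp : 0 < L) by (enough (xm <= L) by lra; apply HL1; split; auto; lra).
  exists L. split; [auto|split; [|intros x Hx Hg; apply HL1; split; auto]].
  apply Rle_antisym; apply Rnot_lt_le; intro Hlt.
  - destruct (continuity_pt_bound _ _ (gk_continuity_pt k L HLp) (gk k L - rho)
                ltac:(lra)) as [d [Hd Hnear]].
    assert (Hs : Rabs (L + d/2 - L) < d) by (rewrite Rabs_right; lra).
    specialize (Hnear _ Hs). rewrite Rabs_lt_between in Hnear.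
    assert (L + d/2 <= L) by (apply HL1; split; lra). lra.
  - destruct (continuity_pt_bound _ _ (gk_continuity_pt k L HLp) (rho - gk k L)
                ltac:(lra)) as [d [Hd Hnear]].
    assert (Hnot : ~ (forall x, S x -> x <= L - d)).
    { intro Hc. assert (L <= L - d) by (apply HL2; intros x Hx; apply Hc; auto). lra. }
    apply not_all_ex_not in Hnot. destruct Hnot as [x Hx].
    apply imply_to_and in Hx. destruct Hx as [[Hx0 Sx] Hx].
    assert (x <= L) by (apply HL1; split; auto).
    assert (Hs : Rabs (x - L) < d) by (rewrite Rabs_left1; lra).
    specialize (Hnear x Hs). rewrite Rabs_lt_between in Hnear. lra.
Qed.

Lemma Rpower_1_base y : Rpower 1 y = 1.
Proof. unfold Rpower. rewrite ln_1, Rmult_0_r. apply exp_0. Qed.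

Lemma u_Rpower k th : th < 1 -> u k th = Rpower (1 - th) (/ INR k).
Proof. intro H. unfold u. destruct (Rle_dec (1 - th) 0); [lra|auto]. Qed.

Lemma u_pos k th : th < 1 -> 0 < u k th.
Proof. intro H. rewrite u_Rpower; auto. apply exp_pos. Qed.

Lemma u_0 k : u k 0 = 1.
Proof. rewrite u_Rpower, Rminus_0_r; [apply Rpower_1_base|lra]. Qed.

Lemma u_pow k th : (0 < k)%nat -> th < 1 -> u k th ^ k = 1 - th.
Proof.
  intros Hk H. rewrite u_Rpower, <- Rpower_pow by (auto; apply exp_pos).
  rewrite Rpower_mult, Rinv_l by (apply not_0_INR; lia). apply Rpower_1. lra.
Qed.

Lemma u_lt_1 k th : (0 < k)%nat -> 0 < th < 1 -> u k th < 1.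
Proof.
  intros Hk H. rewrite u_Rpower by lra.
  enough (Hlt : Rpower (1 - th) (/ INR k) < Rpower 1 (/ INR k))
    by (rewrite Rpower_1_base in Hlt; auto).
  apply Rlt_Rpower_l; [apply Rinv_0_lt_compat, lt_0_INR; lia|lra].
Qed.

Lemma u_one_sub_pow k w : (0 < k)%nat -> 0 < w -> u k (1 - w ^ k) = w.
Proof.
  intros Hk Hw. pose proof (pow_lt w k Hw).
  rewrite u_Rpower by lra. replace (1 - (1 - w ^ k)) with (w ^ k) by ring.
  rewrite <- Rpower_pow, Rpower_mult, Rinv_r by (auto; apply not_0_INR; lia).
  apply Rpower_1; auto.
Qed.

Lemma one_sub_exp_opp_surj v : 0 < v < 1 -> exists x, 0 < x /\ v = 1 - exp (- x).
Proof.
  intro Hv. exists (- ln (1 - v)). split.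
  - assert (ln (1 - v) < 0) by (rewrite <- ln_1; apply ln_increasing; lra). lra.
  - rewrite Ropp_involutive, exp_ln; lra.
Qed.

Lemma h1_one_pos k rho : 0 < h1 k rho 1.
Proof. unfold h1. rewrite pow1. pose proof (exp_pos (- (INR k * 1) / rho)). lra. Qed.

Lemma h1_nonpos_iff k rho x : 0 < rho -> 0 < x ->
  h1 k rho (1 - exp (- x)) <= 0 <-> rho <= gk k x.
Proof.
  intros Hr Hx. unfold h1, gk. set (v := 1 - exp (- x)).
  set (a := INR k * v ^ (k - 1)).
  replace (v - 1) with (- exp (- x)) by (unfold v; ring).
  replace (- a / rho) with (- (a / rho)) by (field; lra).
  transitivity (x <= a / rho).
  - split; intro H.
    + apply Ropp_le_cancel, Rnot_lt_le. intro Hlt. apply exp_increasing in Hlt. lra.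
    + destruct H as [H|H]; [|rewrite H; lra].
      apply Ropp_lt_contravar, exp_increasing in H. lra.
  - rewrite <- (Rle_div_r x a rho), <- (Rle_div_r rho a x), Rmult_comm by auto. tauto.
Qed.

Lemma gk_ge_of_h1_u_nonpos k rho th : (0 < k)%nat -> 0 < rho -> 0 <= th < 1 ->
  h1 k rho (u k th) <= 0 -> exists x, 0 < x /\ u k th = 1 - exp (- x) /\ rho <= gk k x.
Proof.
  intros Hk Hr Hth Hh. destruct (Req_dec th 0) as [->|Hne].
  { rewrite u_0 in Hh. pose proof (h1_one_pos k rho). lra. }
  assert (Hv : 0 < u k th < 1) by (split; [apply u_pos|apply u_lt_1]; lia || lra).
  destruct (one_sub_exp_opp_surj _ Hv) as [x [Hx Hvx]].
  exists x. rewrite Hvx, h1_nonpos_iff in Hh by auto. auto.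
Qed.

Lemma Glb_Rbar_min (A : R -> Prop) t0 : A t0 -> (forall t, A t -> t0 <= t) ->
  real (Glb_Rbar A) = t0.
Proof.
  intros H1 H2. rewrite (is_glb_Rbar_unique A (Finite t0)); [reflexivity|].
  split.
  - intros x Hx. simpl. auto.
  - intros b Hb. apply Hb. auto.
Qed.

Definition theta_of (k : nat) (L : R) : R := 1 - (1 - exp (- L)) ^ k.

Lemma theta_of_bounds k L : (0 < k)%nat -> 0 < L -> 0 < theta_of k L < 1.
Proof.
  intros Hk HL. destruct (one_sub_exp_opp_bounds L HL) as [Hw _].
  pose proof (pow_lt_1_compat (1 - exp (- L)) k ltac:(lra) Hk).
  pose proof (pow_lt _ k (proj1 Hw)).
  unfold theta_of. lra.
Qed.

Section Largest_solution.

Variables (k : nat) (rho L : R).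
Hypotheses (Hk : (3 <= k)%nat) (Hrho : 0 < rho) (HL : 0 < L) (HgL : gk k L = rho)
  (Hlargest : forall x, 0 < x -> rho <= gk k x -> x <= L).

Lemma gk_largest_solution_eq : INR k * (1 - exp (- L)) ^ (k - 1) = rho * L.
Proof. rewrite <- HgL. unfold gk. field. lra. Qed.

Lemma theta_of_le_of_h1_nonpos th : 0 <= th < 1 -> h1 k rho (u k th) <= 0 ->
  theta_of k L <= th.
Proof.
  intros Hth Hh.
  destruct (gk_ge_of_h1_u_nonpos k rho th ltac:(lia) Hrho Hth Hh) as [x [Hx [Hvx Hgx]]].
  apply Hlargest in Hgx; auto.
  assert (exp (- L) <= exp (- x))
    by (destruct Hgx as [h|h]; [left; apply exp_increasing; lra|rewrite h; lra]).
  pose proof (pow_incr (u k th) (1 - exp (- L)) k ltac:(pose proof (u_pos k th); lra)) as Hpow.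
  rewrite u_pow in Hpow by (lia || lra). unfold theta_of. lra.
Qed.

Lemma h1_u_theta_of : h1 k rho (u k (theta_of k L)) = 0.
Proof.
  destruct (one_sub_exp_opp_bounds L HL) as [[Hw _] _].
  unfold theta_of. rewrite u_one_sub_pow by (lia || lra). unfold h1.
  rewrite gk_largest_solution_eq. replace (- (rho * L) / rho) with (- L) by (field; lra). ring.
Qed.

Lemma theta_star_eq : theta_star k rho = theta_of k L.
Proof.
  pose proof (theta_of_bounds k L ltac:(lia) HL).
  apply Glb_Rbar_min.
  - split; [lra|]. rewrite h1_u_theta_of. lra.
  - intros t [Ht Hh]. destruct (Req_dec t 1) as [->|Hne]; [lra|].
    apply theta_of_le_of_h1_nonpos; auto. lra.
Qed.

Lemma h1_u_pos_before th : 0 <= th < theta_of k L -> 0 < h1 k rho (u k th).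
Proof.
  intro Hth. pose proof (theta_of_bounds k L ltac:(lia) HL).
  apply Rnot_le_lt. intro Hh. apply theta_of_le_of_h1_nonpos in Hh; lra.
Qed.

End Largest_solution.

Lemma theta_star_above_rho_max k rho : (3 <= k)%nat -> rho_max k < rho -> theta_star k rho = 1.
Proof.
  intros Hk Hr. destruct (rho_max_spec k Hk) as [Hub [xm [Hxm Hxm2]]].
  assert (Hrp : 0 < rho) by (pose proof (gk_pos k xm ltac:(lia) Hxm); lra).
  apply Glb_Rbar_min.
  - split; [lra|]. unfold u. destruct (Rle_dec (1 - 1) 0); [|lra].
    unfold h1. replace (k - 1)%nat with (S (k - 2)) by lia. simpl.
    replace (- (INR k * (0 * 0 ^ (k - 2))) / rho) with 0 by (field; lra). rewrite exp_0. lra.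
  - intros t [Ht Hh]. destruct (Req_dec t 1) as [->|Hne]; [lra|]. exfalso.
    destruct (gk_ge_of_h1_u_nonpos k rho t ltac:(lia) Hrp ltac:(lra) Hh) as [x [Hx [_ Hgx]]].
    pose proof (Hub _ Hx). lra.
Qed.

(** * The first phase of the ODE *)

Definition lam_explicit (k : nat) (rho t : R) : R :=
  INR k / rho * exp ((INR k - 1) / INR k * ln (1 - t)).

Definition y1_explicit (k : nat) (rho t : R) : R :=
  INR k * (1 - t) - rho * lam_explicit k rho t * (1 - exp (- lam_explicit k rho t)).

Definition y2_explicit (k : nat) (rho t : R) : R :=
  rho * (1 - exp (- lam_explicit k rho t) - lam_explicit k rho t * exp (- lam_explicit k rho t)).

Lemma lam_explicit_pos k rho t : (0 < k)%nat -> 0 < rho -> 0 < lam_explicit k rho t.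
Proof.
  intros Hk Hr. pose proof (lt_0_INR k Hk). unfold lam_explicit.
  apply Rmult_lt_0_compat; [apply Rdiv_lt_0_compat; lra|apply exp_pos].
Qed.

Lemma lam_explicit_0 k rho : lam_explicit k rho 0 = INR k / rho.
Proof. unfold lam_explicit. rewrite Rminus_0_r, ln_1, Rmult_0_r, exp_0. ring. Qed.

Lemma exp_pow a n : exp a ^ n = exp (INR n * a).
Proof.
  rewrite <- (exp_ln (exp a ^ n)) by (apply pow_lt, exp_pos).
  rewrite ln_pow by apply exp_pos. rewrite ln_exp. auto.
Qed.

Lemma lam_explicit_u k rho t : (0 < k)%nat -> 0 < rho -> t < 1 ->
  lam_explicit k rho t = INR k * u k t ^ (k - 1) / rho.
Proof.
  intros Hk Hr Ht. unfold lam_explicit. rewrite u_Rpower by auto. unfold Rpower.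
  rewrite exp_pow, minus_INR by lia. simpl (INR 1).
  replace ((INR k - 1) * (/ INR k * ln (1 - t))) with ((INR k - 1) / INR k * ln (1 - t))
    by (unfold Rdiv; ring).
  field. lra.
Qed.

Lemma y1_explicit_h1 k rho t : (0 < k)%nat -> 0 < rho -> t < 1 ->
  y1_explicit k rho t = INR k * u k t ^ (k - 1) * h1 k rho (u k t).
Proof.
  intros Hk Hr Ht. unfold y1_explicit, h1. rewrite lam_explicit_u by auto.
  rewrite <- (u_pow k t Hk Ht). replace k with (S (k - 1)) at 3 by lia. simpl.
  replace (- (INR k * u k t ^ (k - 1)) / rho) with (- (INR k * u k t ^ (k - 1) / rho))
    by (field; lra).
  field. lra.
Qed.

Lemma y2_explicit_pos k rho t : (0 < k)%nat -> 0 < rho -> 0 < y2_explicit k rho t.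
Proof.
  intros Hk Hr. pose proof (lam_explicit_pos k rho t Hk Hr) as Hm. unfold y2_explicit.
  set (m := lam_explicit k rho t) in *.
  pose proof (exp_sub_1_sub_pos m Hm). pose proof (exp_pos m). rewrite exp_Ropp.
  replace (rho * (1 - / exp m - m * / exp m)) with (rho * (exp m - 1 - m) / exp m)
    by (field; lra).
  apply Rdiv_lt_0_compat; nra.
Qed.

Lemma y_explicit_slack k rho t : (0 < k)%nat -> 0 < rho ->
  2 * y2_explicit k rho t < INR k * (1 - t) - y1_explicit k rho t.
Proof.
  intros Hk Hr. pose proof (lam_explicit_pos k rho t Hk Hr) as Hm.
  unfold y1_explicit, y2_explicit. set (m := lam_explicit k rho t) in *.
  pose proof (exp_sub_1_sub_pos m Hm). pose proof (exp_pos m).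
  pose proof (f1_gt_2 m Hm) as Hf. unfold f1 in Hf. apply Rlt_div_r in Hf; [|lra].
  rewrite exp_Ropp.
  replace (INR k * (1 - t) - (INR k * (1 - t) - rho * m * (1 - / exp m)))
    with (2 * (rho * (1 - / exp m - m * / exp m))
          + rho * (m * (exp m - 1) - 2 * (exp m - 1 - m)) / exp m) by (field; lra).
  assert (0 < rho * (m * (exp m - 1) - 2 * (exp m - 1 - m)) / exp m)
    by (apply Rdiv_lt_0_compat; nra).
  lra.
Qed.

Lemma y_explicit_init k rho : (0 < k)%nat -> 0 < rho ->
  y1_explicit k rho 0 = INR k * exp (- (INR k / rho)) /\
  y2_explicit k rho 0 = rho * (1 - exp (- (INR k / rho))) - INR k * exp (- (INR k / rho)).
Proof.
  intros Hk Hr. unfold y1_explicit, y2_explicit. rewrite lam_explicit_0. split; field; lra.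
Qed.

Lemma y1_explicit_continuity_pt k rho t : t < 1 -> continuity_pt (y1_explicit k rho) t.
Proof.
  intro Ht. apply continuity_pt_of_ex_derive. unfold y1_explicit, lam_explicit.
  auto_derive. lra.
Qed.

Lemma y2_explicit_continuity_pt k rho t : t < 1 -> continuity_pt (y2_explicit k rho) t.
Proof.
  intro Ht. apply continuity_pt_of_ex_derive. unfold y2_explicit, lam_explicit.
  auto_derive. lra.
Qed.

Definition D01 (t : R) : Prop := 0 <= t < 1.

Definition solves_ode (k : nat) (Y1 Y2 : R -> R) : Prop :=
  forall t, 0 <= t < 1 ->
    deriv_within D01 Y1 (F1 k (Y1 t) (Y2 t) t) t /\
    deriv_within D01 Y2 (F2 k (Y1 t) (Y2 t) t) t.

Definition phase_one (k : nat) (Y1 Y2 : R -> R) (t : R) : Prop :=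
  0 <= t < 1 /\ 0 < Y1 t /\ 0 < Y2 t /\ 2 * Y2 t < INR k * (1 - t) - Y1 t.

Definition lam_arg (k : nat) (Y1 Y2 : R -> R) (t : R) : R := (INR k * (1 - t) - Y1 t) / Y2 t.

(* The logarithms of the conserved quantities [lam (1 - t)^(-(k-1)/k)] and
   [y2 e^lam / (e^lam - 1 - lam)] of the first phase, where [lam = lam_of (lam_arg t)]. *)
Definition first_integral1 (k : nat) (Y1 Y2 : R -> R) (t : R) : R :=
  ln (lam_of (lam_arg k Y1 Y2 t)) - (INR k - 1) / INR k * ln (1 - t).

Definition first_integral2 (k : nat) (Y1 Y2 : R -> R) (t : R) : R :=
  ln (Y2 t) + lam_of (lam_arg k Y1 Y2 t)
  - ln (exp (lam_of (lam_arg k Y1 Y2 t)) - 1 - lam_of (lam_arg k Y1 Y2 t)).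

Lemma Gl_of_pos l : 0 < l -> Gl l = l ^ 2 / (exp l - 1 - l).
Proof. intro. unfold Gl. destruct (Req_EM_T l 0); [lra|auto]. Qed.

Lemma lam_arg_gt_2 k Y1 Y2 t : phase_one k Y1 Y2 t -> 2 < lam_arg k Y1 Y2 t.
Proof.
  intros [H0 [H1 [H2 H3]]]. unfold lam_arg.
  apply Rlt_div_r; lra.
Qed.

Lemma F_phase_one k y1 y2 t : 0 < y1 -> 0 < y2 -> 2 < (INR k * (1 - t) - y1) / y2 ->
  let l := lam_of ((INR k * (1 - t) - y1) / y2) in
  let G := l ^ 2 / (exp l - 1 - l) in
  F1 k y1 y2 t = -1 + (INR k - 1) * ((y2 * G - y1) / (INR k * (1 - t))) /\
  F2 k y1 y2 t = - ((INR k - 1) * (y2 * G / (INR k * (1 - t)))).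
Proof.
  intros H1 H2 Hc l G.
  destruct (lam_of_spec _ Hc) as [Hl0 _]. fold l in Hl0.
  unfold F1, F2, frak_p1, frak_p0. destruct (Rlt_dec 0 y2); [|lra].
  rewrite Rmax_left by lra. fold l. rewrite Gl_of_pos by auto. fold G.
  split; [unfold Rdiv; ring|reflexivity].
Qed.

Section First_phase_derivatives.

Variables (k : nat) (Y1 Y2 : R -> R) (t : R).
Hypotheses (Hk : (3 <= k)%nat) (Hphase : phase_one k Y1 Y2 t)
  (HdY1 : deriv_within D01 Y1 (F1 k (Y1 t) (Y2 t) t) t)
  (HdY2 : deriv_within D01 Y2 (F2 k (Y1 t) (Y2 t) t) t).

Let lam := lam_of (lam_arg k Y1 Y2 t).

Lemma lam_phase_one_deriv :
  deriv_within D01 (fun s => lam_of (lam_arg k Y1 Y2 s))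
    (- (INR k - 1) * lam / (INR k * (1 - t))) t.
Proof.
  pose proof (lam_arg_gt_2 _ _ _ _ Hphase) as Hc.
  destruct Hphase as [Ht [Hy1 [Hy2 _]]]. pose proof (INR_ge_3 k Hk).
  destruct (F_phase_one k (Y1 t) (Y2 t) t Hy1 Hy2 Hc) as [EF1 EF2].
  fold (lam_arg k Y1 Y2 t) lam in EF1, EF2.
  destruct (lam_of_spec _ Hc) as [Hl0 Hl1]. fold lam in Hl0, Hl1.
  pose proof (exp_sub_1_sub_pos lam Hl0). pose proof (df1_numerator_pos lam Hl0).
  assert (Hy1e : Y1 t = INR k * (1 - t) - Y2 t * f1 lam)
    by (rewrite Hl1; unfold lam_arg; field; lra).
  assert (HdN : derivable_pt_lim (fun s => INR k * (1 - s)) t (- INR k))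
    by (solve_derive; [auto|ring]).
  pose proof (deriv_within_mult _ _ _ _ _ t
      (deriv_within_plus _ _ _ _ _ t (deriv_within_of_derivable_pt_lim D01 _ _ t HdN)
         (deriv_within_scal _ _ _ (-1) t HdY1))
      (deriv_within_inv D01 Y2 _ t ltac:(lra) HdY2)) as Hdarg.
  apply (deriv_within_ext _ _ (lam_arg k Y1 Y2)) in Hdarg;
    [|intros; unfold lam_arg, Rdiv; ring|unfold lam_arg, Rdiv; ring].
  pose proof (deriv_within_comp _ lam_of _ _ _ t Hdarg (lam_of_derivable_pt_lim _ Hc)) as Hdlam.
  fold lam in Hdlam.
  eapply deriv_within_val; [|exact Hdlam].
  (* with [G = lam^2 / (e^lam - 1 - lam)] this is the identity [f1 + G - f1 G = lam df1] *)
  rewrite EF1, EF2, Hy1e. unfold f1, df1. field. repeat split; lra.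
Qed.

Lemma first_integral1_stationary : deriv_within D01 (first_integral1 k Y1 Y2) 0 t.
Proof.
  pose proof (lam_arg_gt_2 _ _ _ _ Hphase) as Hc.
  destruct (lam_of_spec _ Hc) as [Hl0 _]. fold lam in Hl0.
  destruct Hphase as [Ht _]. pose proof (INR_ge_3 k Hk).
  assert (Hdln : derivable_pt_lim (fun s => ln (1 - s)) t (- / (1 - t)))
    by (solve_derive; [lra|field; lra]).
  pose proof (deriv_within_plus _ _ _ _ _ t
      (deriv_within_comp _ ln _ _ _ t lam_phase_one_deriv (derivable_pt_lim_ln lam Hl0))
      (deriv_within_scal _ _ _ (- ((INR k - 1) / INR k)) t
         (deriv_within_of_derivable_pt_lim D01 _ _ t Hdln))) as Hd.
  eapply deriv_within_val; [|eapply deriv_within_ext; [| |exact Hd]].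
  - field. repeat split; lra.
  - intros s _. unfold first_integral1. ring.
  - unfold first_integral1. ring.
Qed.

Lemma first_integral2_stationary : deriv_within D01 (first_integral2 k Y1 Y2) 0 t.
Proof.
  pose proof (lam_arg_gt_2 _ _ _ _ Hphase) as Hc.
  destruct (lam_of_spec _ Hc) as [Hl0 _]. fold lam in Hl0.
  destruct Hphase as [Ht [Hy1 [Hy2 _]]]. pose proof (INR_ge_3 k Hk).
  destruct (F_phase_one k (Y1 t) (Y2 t) t Hy1 Hy2 Hc) as [_ EF2].
  fold (lam_arg k Y1 Y2 t) lam in EF2.
  pose proof (exp_sub_1_sub_pos lam Hl0).
  assert (Hdh : derivable_pt_lim (fun z => ln (exp z - 1 - z)) lam
                  ((exp lam - 1) / (exp lam - 1 - lam)))
    by (solve_derive; [lra|field; lra]).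
  pose proof (deriv_within_plus _ _ _ _ _ t
      (deriv_within_plus _ _ _ _ _ t
         (deriv_within_comp _ ln _ _ _ t HdY2 (derivable_pt_lim_ln _ Hy2))
         lam_phase_one_deriv)
      (deriv_within_scal _ _ _ (-1) t (deriv_within_comp _ _ _ _ _ t lam_phase_one_deriv Hdh)))
    as Hd.
  eapply deriv_within_val; [|eapply deriv_within_ext; [| |exact Hd]].
  - rewrite EF2. field. repeat split; lra.
  - intros s _. unfold first_integral2. ring.
  - unfold first_integral2. ring.
Qed.

End First_phase_derivatives.

Lemma derivable_pt_lim_of_deriv_within_D01 f d x : 0 < x < 1 ->
  deriv_within D01 f d x -> derivable_pt_lim f x d.
Proof.
  intros Hx. apply (derivable_pt_lim_of_deriv_within D01 f d x (Rmin x (1 - x))).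
  - apply Rmin_pos; lra.
  - intros t Ht. unfold D01. pose proof (Rmin_l x (1 - x)). pose proof (Rmin_r x (1 - x)).
    rewrite Rabs_lt_between in Ht. lra.
Qed.

Lemma const_of_deriv_within_zero f T : 0 < T <= 1 ->
  (forall t, 0 <= t < T -> deriv_within D01 f 0 t) -> forall t, 0 <= t < T -> f t = f 0.
Proof.
  intros HT Hd.
  assert (Hinterior : forall s t, 0 < s -> s < t -> t < T -> f t = f s).
  { intros s t Hs Hst Ht.
    destruct (MVT_gen f s t (fun _ => 0)) as [c [_ Hc]]; [| |lra].
    - intros x Hx. rewrite Rmin_left, Rmax_right in Hx by lra.
      apply is_derive_Reals, derivable_pt_lim_of_deriv_within_D01; [lra|]. apply Hd. lra.
    - intros x Hx. rewrite Rmin_left, Rmax_right in Hx by lra.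
      apply derivable_continuous_pt. exists 0.
      apply derivable_pt_lim_of_deriv_within_D01; [lra|]. apply Hd. lra. }
  intros t Ht. destruct (Req_dec t 0) as [->|Hne]; auto.
  apply Rminus_diag_uniq, Rabs_eq_0, Rle_antisym; [|apply Rabs_pos].
  apply Rnot_lt_le. intro Hpos.
  destruct (deriv_within_cont_within D01 f 0 0 (Hd 0 ltac:(lra)) _ Hpos) as [d [Hd0 Hnear]].
  set (s := Rmin t d / 2).
  pose proof (Rmin_l t d). pose proof (Rmin_r t d). pose proof (Rmin_pos t d ltac:(lra) Hd0).
  assert (Hs : Rabs (s - 0) < d) by (unfold s; rewrite Rminus_0_r, Rabs_right; lra).
  specialize (Hnear s ltac:(unfold D01, s; lra) Hs).
  rewrite <- (Hinterior s t) in Hnear by (unfold s; lra). lra.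
Qed.

Lemma eq_at_right_end f g T : 0 < T < 1 -> cont_within D01 f T -> cont_within D01 g T ->
  (forall t, 0 <= t < T -> f t = g t) -> f T = g T.
Proof.
  intros HT Hf Hg He.
  apply Rminus_diag_uniq, Rabs_eq_0, Rle_antisym; [|apply Rabs_pos].
  apply Rnot_lt_le. intro Hpos. set (e := Rabs (f T - g T)) in *.
  destruct (Hf (e / 2) ltac:(lra)) as [d1 [Hd1 H1]].
  destruct (Hg (e / 2) ltac:(lra)) as [d2 [Hd2 H2]].
  set (s := T - Rmin T (Rmin d1 d2) / 2).
  assert (0 < Rmin T (Rmin d1 d2)) by (repeat apply Rmin_pos; lra).
  pose proof (Rmin_l T (Rmin d1 d2)). pose proof (Rmin_r T (Rmin d1 d2)).
  pose proof (Rmin_l d1 d2). pose proof (Rmin_r d1 d2).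
  assert (Hs : Rabs (s - T) < Rmin d1 d2) by (rewrite Rabs_left; unfold s; lra).
  specialize (H1 s ltac:(unfold D01, s; lra) ltac:(lra)).
  specialize (H2 s ltac:(unfold D01, s; lra) ltac:(lra)).
  rewrite (He s ltac:(unfold s; lra)) in H1.
  assert (e <= Rabs (g s - f T) + Rabs (g s - g T)).
  { unfold e. replace (f T - g T) with (- (g s - f T) + (g s - g T)) by ring.
    eapply Rle_trans; [apply Rabs_triang|]. rewrite Rabs_Ropp. lra. }
  lra.
Qed.

Lemma cont_within_pos D f x : cont_within D f x -> 0 < f x ->
  exists d, 0 < d /\ forall s, D s -> Rabs (s - x) < d -> 0 < f s.
Proof.
  intros Hf Hpos. destruct (Hf (f x) Hpos) as [d [Hd Hnear]].
  exists d. split; auto. intros s Ds Hs. specialize (Hnear s Ds Hs).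
  rewrite Rabs_lt_between in Hnear. lra.
Qed.

Lemma real_induction (P : R -> Prop) b : 0 < b -> P 0 ->
  (forall T, 0 < T < b -> (forall s, 0 <= s < T -> P s) -> P T) ->
  (forall T, 0 <= T < b -> P T -> exists d, 0 < d /\ forall s, T <= s < T + d -> P s) ->
  forall t, 0 <= t < b -> P t.
Proof.
  intros Hb H0 Hclosed Hopen.
  set (S := fun t => 0 <= t <= b /\ forall s, 0 <= s < t -> P s).
  destruct (completeness S) as [T [HT1 HT2]].
  { exists b. intros t [Ht _]. lra. }
  { exists 0. split; [lra|]. intros s Hs. lra. }
  assert (HT0 : 0 <= T) by (apply HT1; split; [lra|intros s Hs; lra]).
  assert (HTb : T <= b) by (apply HT2; intros t [Ht _]; lra).
  assert (Hbelow : forall s, 0 <= s < T -> P s).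
  { intros s Hs. destruct (classic (exists t, S t /\ s < t)) as [[t [[_ Ht] Hst]]|Hn].
    - apply Ht. lra.
    - enough (T <= s) by lra. apply HT2. intros t St.
      apply Rnot_lt_le. intro Hlt. apply Hn. exists t. auto. }
  assert (HTeq : T = b).
  { apply Rle_antisym; auto. apply Rnot_lt_le. intro HTlt.
    assert (HPT : P T)
      by (destruct (Req_dec T 0) as [->|Hne]; [auto|apply Hclosed; auto; lra]).
    destruct (Hopen T ltac:(lra) HPT) as [d [Hd Hright]].
    assert (T < Rmin (T + d) b) by (apply Rmin_glb_lt; lra).
    pose proof (Rmin_r (T + d) b).
    enough (Rmin (T + d) b <= T) by lra.
    apply HT1. split; [lra|].
    intros s Hs. destruct (Rlt_le_dec s T); [apply Hbelow; lra|].
    apply Hright. pose proof (Rmin_l (T + d) b). lra. }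
  intros t Ht. apply Hbelow. lra.
Qed.

Section Phase_one.

Variables (k : nat) (rho : R) (Y1 Y2 : R -> R).
Hypotheses (Hk : (3 <= k)%nat) (Hrho : 0 < rho)
  (HY10 : Y1 0 = INR k * exp (- (INR k / rho)))
  (HY20 : Y2 0 = rho * (1 - exp (- (INR k / rho))) - INR k * exp (- (INR k / rho)))
  (Hode : solves_ode k Y1 Y2).

Lemma Y_cont_within t : 0 <= t < 1 -> cont_within D01 Y1 t /\ cont_within D01 Y2 t.
Proof.
  intro Ht. destruct (Hode t Ht) as [H1 H2].
  split; eapply deriv_within_cont_within; eauto.
Qed.

Lemma lam_arg_init : lam_of (lam_arg k Y1 Y2 0) = INR k / rho.
Proof.
  pose proof (INR_ge_3 k Hk). set (m := INR k / rho).
  assert (Hm : 0 < m) by (apply Rdiv_lt_0_compat; lra).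
  pose proof (exp_sub_1_sub_pos m Hm). pose proof (exp_pos m).
  rewrite <- (lam_of_f1 m Hm). f_equal.
  unfold lam_arg, f1. rewrite HY10, HY20. fold m. rewrite exp_Ropp.
  replace rho with (INR k / m) by (unfold m; field; lra).
  assert (0 < INR k * (exp m - 1 - m)) by nra.
  field. repeat split; lra.
Qed.

Lemma explicit_of_first_integrals t : phase_one k Y1 Y2 t ->
  first_integral1 k Y1 Y2 t = first_integral1 k Y1 Y2 0 ->
  first_integral2 k Y1 Y2 t = first_integral2 k Y1 Y2 0 ->
  Y1 t = y1_explicit k rho t /\ Y2 t = y2_explicit k rho t.
Proof.
  intros Hphase E1 E2. pose proof (INR_ge_3 k Hk).
  pose proof (lam_arg_gt_2 _ _ _ _ Hphase) as Hc.
  destruct Hphase as [Ht [Hy1 [Hy2 _]]].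
  destruct (lam_of_spec _ Hc) as [Hl0 Hl1].
  unfold first_integral1, first_integral2 in E1, E2. rewrite lam_arg_init in E1, E2.
  set (l := lam_of (lam_arg k Y1 Y2 t)) in *. set (m := INR k / rho) in *.
  assert (Hm : 0 < m) by (apply Rdiv_lt_0_compat; lra).
  pose proof (exp_sub_1_sub_pos l Hl0). pose proof (exp_sub_1_sub_pos m Hm).
  rewrite Rminus_0_r, ln_1, Rmult_0_r, Rminus_0_r in E1.
  assert (Hlam : l = lam_explicit k rho t).
  { unfold lam_explicit. fold m.
    rewrite <- (exp_ln l Hl0), <- (exp_ln m Hm), <- exp_plus. f_equal. lra. }
  assert (HY20' : Y2 0 = rho * exp (- m) * (exp m - 1 - m)).
  { rewrite HY20. fold m. rewrite exp_Ropp. unfold m. field. split; [lra|apply exp_neq_0]. }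
  assert (Hy2e : Y2 t = rho * exp (- l) * (exp l - 1 - l)).
  { apply ln_inv; [auto|apply Rmult_lt_0_compat; [apply Rmult_lt_0_compat|]; auto using exp_pos|].
    rewrite HY20' in E2.
    rewrite !ln_mult, !ln_exp in * by (auto using exp_pos;
      apply Rmult_lt_0_compat; auto using exp_pos).
    lra. }
  assert (Hy1e : Y1 t = INR k * (1 - t) - Y2 t * f1 l)
    by (rewrite Hl1; unfold lam_arg; field; lra).
  unfold y1_explicit, y2_explicit. rewrite <- Hlam, Hy1e, Hy2e. unfold f1.
  rewrite exp_Ropp. pose proof (exp_pos l). split; field; lra.
Qed.

Lemma explicit_on_phase_one T : 0 < T <= 1 -> (forall t, 0 <= t < T -> phase_one k Y1 Y2 t) ->
  forall t, 0 <= t < T -> Y1 t = y1_explicit k rho t /\ Y2 t = y2_explicit k rho t.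
Proof.
  intros HT Hphase t Ht.
  assert (Hstat : forall s, 0 <= s < T ->
    deriv_within D01 (first_integral1 k Y1 Y2) 0 s /\
    deriv_within D01 (first_integral2 k Y1 Y2) 0 s).
  { intros s Hs. destruct (Hode s ltac:(lra)).
    split; [apply first_integral1_stationary|apply first_integral2_stationary]; auto. }
  apply explicit_of_first_integrals; auto;
    apply (const_of_deriv_within_zero _ T HT); auto; apply Hstat.
Qed.

Lemma phase_one_of_explicit t : 0 <= t < 1 -> 0 < y1_explicit k rho t ->
  Y1 t = y1_explicit k rho t -> Y2 t = y2_explicit k rho t -> phase_one k Y1 Y2 t.
Proof.
  intros Ht Hpos E1 E2. unfold phase_one. rewrite E1, E2.
  split; [auto|split; [auto|split]];
    [apply y2_explicit_pos|apply y_explicit_slack]; auto; lia.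
Qed.

Lemma phase_one_open T : 0 <= T < 1 -> phase_one k Y1 Y2 T ->
  exists d, 0 < d /\ forall s, T <= s < T + d -> phase_one k Y1 Y2 s.
Proof.
  intros HT [_ [G1 [G2 G3]]]. destruct (Y_cont_within T HT) as [HcY1 HcY2].
  assert (Hslack : cont_within D01 (fun s => INR k * (1 - s) + -1 * Y1 s + -2 * Y2 s) T).
  { apply cont_within_plus; [apply cont_within_plus|]; auto using cont_within_scal.
    apply cont_within_of_continuity_pt, continuity_pt_of_ex_derive. auto_derive. auto. }
  destruct (cont_within_pos _ _ _ HcY1 G1) as [d1 [Hd1 P1]].
  destruct (cont_within_pos _ _ _ HcY2 G2) as [d2 [Hd2 P2]].
  destruct (cont_within_pos _ _ _ Hslack ltac:(lra)) as [d3 [Hd3 P3]].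
  set (d := Rmin (Rmin d1 d2) (Rmin d3 (1 - T))).
  assert (Hdd : 0 < d /\ d <= d1 /\ d <= d2 /\ d <= d3 /\ d <= 1 - T).
  { unfold d. pose proof (Rmin_l (Rmin d1 d2) (Rmin d3 (1 - T))).
    pose proof (Rmin_r (Rmin d1 d2) (Rmin d3 (1 - T))).
    pose proof (Rmin_l d1 d2). pose proof (Rmin_r d1 d2).
    pose proof (Rmin_l d3 (1 - T)). pose proof (Rmin_r d3 (1 - T)).
    repeat split; try lra. repeat apply Rmin_pos; lra. }
  exists d. split; [lra|]. intros s Hs.
  assert (Ds : D01 s) by (unfold D01; lra).
  assert (Hsd : Rabs (s - T) < d) by (rewrite Rabs_right; lra).
  specialize (P1 s Ds ltac:(lra)). specialize (P2 s Ds ltac:(lra)).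
  specialize (P3 s Ds ltac:(lra)).
  repeat split; lra.
Qed.

Lemma explicit_until ts : 0 < ts < 1 -> (forall t, 0 <= t < ts -> 0 < y1_explicit k rho t) ->
  forall t, 0 <= t <= ts -> Y1 t = y1_explicit k rho t /\ Y2 t = y2_explicit k rho t.
Proof.
  intros Hts Hpos.
  destruct (y_explicit_init k rho ltac:(lia) Hrho) as [HZ10 HZ20].
  assert (Hagree : forall T, 0 < T < 1 ->
    (forall t, 0 <= t < T -> Y1 t = y1_explicit k rho t /\ Y2 t = y2_explicit k rho t) ->
    Y1 T = y1_explicit k rho T /\ Y2 T = y2_explicit k rho T).
  { intros T HT Hbelow. destruct (Y_cont_within T ltac:(lra)) as [HcY1 HcY2].
    split; apply eq_at_right_end; auto;
      try (apply cont_within_of_continuity_pt;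
           first [apply y1_explicit_continuity_pt|apply y2_explicit_continuity_pt]; lra);
      intros t Ht; apply Hbelow; auto. }
  assert (Hphase : forall t, 0 <= t < ts -> phase_one k Y1 Y2 t).
  { apply real_induction; [lra| | |].
    - apply phase_one_of_explicit; [lra|apply Hpos; lra|congruence|congruence].
    - intros T HT Hbelow. destruct (Hagree T ltac:(lra)) as [E1 E2].
      + apply explicit_on_phase_one; [lra|auto].
      + apply phase_one_of_explicit; auto; [lra|apply Hpos; lra].
    - intros T HT HPT. apply phase_one_open; auto. lra. }
  intros t Ht. destruct (Rlt_le_dec t ts) as [Hlt|Hge].
  - apply (explicit_on_phase_one ts); auto; lra.
  - replace t with ts by lra. apply Hagree; [lra|].
    apply explicit_on_phase_one; auto. lra.
Qed.

End Phase_one.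

Lemma solves_ode_of_is_y_solution k y1 y2 rho : is_y_solution k y1 y2 -> 0 < rho ->
  solves_ode k (fun t => y1 t rho) (fun t => y2 t rho).
Proof. intros Hsol Hr t Ht. destruct (Hsol rho Hr) as [_ [_ Hd]]. apply Hd. auto. Qed.

Section Below_rho_max.

Variables (k : nat) (y1 y2 : R -> R -> R) (rho L : R).
Hypotheses (Hk : (3 <= k)%nat) (Hsol : is_y_solution k y1 y2) (Hrho : 0 < rho) (HL : 0 < L)
  (HgL : gk k L = rho) (Hlargest : forall x, 0 < x -> rho <= gk k x -> x <= L).

Lemma explicit_until_theta_of : forall t, 0 <= t <= theta_of k L ->
  y1 t rho = y1_explicit k rho t /\ y2 t rho = y2_explicit k rho t.
Proof.
  pose proof (theta_of_bounds k L ltac:(lia) HL). destruct (Hsol rho Hrho) as [H10 [H20 _]].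
  apply explicit_until; auto using solves_ode_of_is_y_solution.
  intros t Ht. rewrite y1_explicit_h1 by (lia || lra).
  pose proof (INR_ge_3 k Hk). pose proof (pow_lt _ (k - 1) (u_pos k t ltac:(lra))).
  pose proof (h1_u_pos_before k rho L Hk Hrho HL Hlargest t Ht).
  apply Rmult_lt_0_compat; [apply Rmult_lt_0_compat|]; lra.
Qed.

Lemma u_theta_of : u k (theta_of k L) = 1 - exp (- L).
Proof.
  destruct (one_sub_exp_opp_bounds L HL) as [[Hw _] _].
  apply u_one_sub_pow; [lia|auto].
Qed.

Lemma lam_explicit_theta_of : lam_explicit k rho (theta_of k L) = L.
Proof.
  pose proof (theta_of_bounds k L ltac:(lia) HL).
  rewrite lam_explicit_u, u_theta_of, (gk_largest_solution_eq k rho L) by (auto; lia || lra).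
  field. lra.
Qed.

Lemma y1_at_theta_of : y1 (theta_of k L) rho = 0.
Proof.
  pose proof (theta_of_bounds k L ltac:(lia) HL).
  rewrite (proj1 (explicit_until_theta_of (theta_of k L) ltac:(lra))).
  rewrite y1_explicit_h1 by (lia || lra).
  rewrite h1_u_theta_of by auto. ring.
Qed.

Lemma y2_at_theta_of : y2 (theta_of k L) rho = INR k / f1 L * (1 - theta_of k L).
Proof.
  pose proof (theta_of_bounds k L ltac:(lia) HL).
  rewrite (proj2 (explicit_until_theta_of (theta_of k L) ltac:(lra))).
  unfold y2_explicit. rewrite lam_explicit_theta_of.
  pose proof (gk_largest_solution_eq k rho L HL HgL) as Heq.
  destruct (one_sub_exp_opp_bounds L HL) as [[Hw _] _].
  pose proof (exp_sub_1_sub_pos L HL). pose proof (exp_pos L). pose proof (f1_gt_2 L HL).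
  assert (Hpow : (1 - exp (- L)) ^ k = (1 - exp (- L)) * (1 - exp (- L)) ^ (k - 1))
    by (rewrite tech_pow_Rmult; f_equal; lia).
  unfold theta_of. rewrite Hpow. replace (1 - (1 - (1 - exp (- L)) * (1 - exp (- L)) ^ (k - 1)))
    with ((1 - exp (- L)) * (1 - exp (- L)) ^ (k - 1)) by ring.
  replace (INR k / f1 L * ((1 - exp (- L)) * (1 - exp (- L)) ^ (k - 1))) with
    (INR k * (1 - exp (- L)) ^ (k - 1) * (1 - exp (- L)) / f1 L) by (field; lra).
  rewrite Heq. unfold f1. rewrite exp_Ropp. field. repeat split; lra.
Qed.

End Below_rho_max.

Lemma theta_star_below_rho_max k y1 y2 rho : (3 <= k)%nat -> is_y_solution k y1 y2 ->
  0 < rho -> rho <= rho_max k ->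
  exists lam,
    (0 < lam /\ gk k lam = rho /\ (forall mu, 0 < mu -> gk k mu = rho -> mu <= lam)) /\
    theta_star k rho = 1 - (1 - exp (- lam)) ^ k /\
    y2 (theta_star k rho) rho = INR k / f1 lam * (1 - theta_star k rho).
Proof.
  intros Hk Hsol Hr Hrm. destruct (gk_largest_solution k rho Hk Hr Hrm) as [L [HL [HgL Hmax]]].
  exists L. split; [split; [auto|split; [auto|intros mu Hmu Hg; apply Hmax; lra]]|].
  rewrite (theta_star_eq k rho L Hk Hr HL HgL Hmax).
  split; [reflexivity|]. apply (y2_at_theta_of k y1 y2 rho L); auto.
Qed.

(** * Smoothness and the second phase of the ODE *)

Definition C2_below_1 (f : R -> R) : Prop :=
  exists df ddf : R -> R, forall t, t < 1 ->
    derivable_pt_lim f t (df t) /\ derivable_pt_lim df t (ddf t) /\ continuity_pt ddf t.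

Lemma y1_explicit_C2 k rho : C2_below_1 (y1_explicit k rho).
Proof.
  evar (df : R -> R).
  assert (Hdf : forall t, t < 1 -> is_derive (y1_explicit k rho) t (df t)).
  { intros t Ht. unfold y1_explicit, lam_explicit, df. auto_derive; [lra|reflexivity]. }
  evar (ddf : R -> R).
  assert (Hddf : forall t, t < 1 -> is_derive df t (ddf t)).
  { intros t Ht. unfold df, ddf. auto_derive; [repeat split; lra|reflexivity]. }
  exists df, ddf. intros t Ht. split; [|split]; try (apply is_derive_Reals; auto).
  apply continuity_pt_of_ex_derive. unfold ddf. auto_derive. repeat split; try lra; nra.
Qed.

Lemma y2_explicit_C2 k rho : C2_below_1 (y2_explicit k rho).
Proof.
  evar (df : R -> R).
  assert (Hdf : forall t, t < 1 -> is_derive (y2_explicit k rho) t (df t)).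
  { intros t Ht. unfold y2_explicit, lam_explicit, df. auto_derive; [lra|reflexivity]. }
  evar (ddf : R -> R).
  assert (Hddf : forall t, t < 1 -> is_derive df t (ddf t)).
  { intros t Ht. unfold df, ddf. auto_derive; [repeat split; try lra; nra|reflexivity]. }
  exists df, ddf. intros t Ht. split; [|split]; try (apply is_derive_Reals; auto).
  apply continuity_pt_of_ex_derive. unfold ddf. auto_derive. repeat split; try lra; nra.
Qed.

Lemma C2_on_of_agree (Y Z : R -> R) a b : b < 1 -> C2_below_1 Z ->
  (forall t, a <= t <= b -> Y t = Z t) -> C2_on a b Y.
Proof.
  intros Hb [df [ddf Hd]] HYZ. exists df, ddf. intros x Hx.
  destruct (Hd x ltac:(lra)) as [H1 [H2 H3]].
  split; [|split].
  - eapply deriv_within_ext; [intros t Ht; symmetry; apply HYZ, Ht|symmetry; auto|].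
    apply deriv_within_of_derivable_pt_lim. exact H1.
  - apply deriv_within_of_derivable_pt_lim. auto.
  - apply cont_within_of_continuity_pt. auto.
Qed.

Definition psi (z : R) : R := z / (exp z - 1).
Definition dpsi (z : R) : R := ((exp z - 1) - z * exp z) / (exp z - 1)^2.

Lemma psi_derivable_pt_lim z : 0 < z -> derivable_pt_lim psi z (dpsi z).
Proof.
  intro Hz. pose proof (exp_sub_1_pos z Hz). unfold psi, dpsi.
  solve_derive; [lra|field; lra].
Qed.

Lemma psi_continuity_pt z : 0 < z -> continuity_pt psi z.
Proof. intro. apply derivable_continuous_pt. eexists. apply psi_derivable_pt_lim. auto. Qed.

Lemma dpsi_continuity_pt z : 0 < z -> continuity_pt dpsi z.
Proof.
  intro Hz. pose proof (exp_sub_1_pos z Hz). apply continuity_pt_of_ex_derive. unfold dpsi.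
  auto_derive. nra.
Qed.

Lemma F_phase_two k y1 y2 t : y1 <= 0 -> 0 < y2 -> 2 * y2 < INR k * (1 - t) ->
  let l := lam_of (INR k * (1 - t) / y2) in
  F1 k y1 y2 t = -1 + (INR k - 1) * psi l /\ F2 k y1 y2 t = - ((INR k - 1) * psi l).
Proof.
  intros H1 H2 H3 l.
  assert (Hc : 2 < INR k * (1 - t) / y2) by (apply Rlt_div_r; lra).
  destruct (lam_of_spec _ Hc) as [Hl1 Hl2]. fold l in Hl1, Hl2.
  pose proof (exp_sub_1_sub_pos l Hl1).
  assert (Hp1 : frak_p1 k y1 y2 t = psi l).
  { unfold frak_p1. destruct (Rlt_dec 0 y2); [|lra].
    rewrite Rmax_right, Rminus_0_r, Gl_of_pos by auto. fold l.
    replace (INR k * (1 - t)) with (y2 * f1 l) by (rewrite Hl2; field; lra).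
    unfold f1, psi. field. repeat split; lra. }
  assert (Hp0 : frak_p0 k y1 y2 t = 0) by (unfold frak_p0; rewrite Rmax_right by lra; lra).
  unfold F1, F2. rewrite Hp1, Hp0. split; ring.
Qed.

Lemma phase_two_after k Y1 Y2 tau : 0 < tau < 1 -> solves_ode k Y1 Y2 ->
  Y1 tau = 0 -> 0 < Y2 tau -> 2 * Y2 tau < INR k * (1 - tau) ->
  F1 k (Y1 tau) (Y2 tau) tau < 0 ->
  exists eps, 0 < eps /\ tau + eps < 1 /\ forall t, tau <= t <= tau + eps ->
    Y1 t <= 0 /\ 0 < Y2 t /\ 2 * Y2 t < INR k * (1 - t).
Proof.
  intros Htau Hode HY1 HY2 Hslack Hneg.
  destruct (Hode tau ltac:(lra)) as [HdY1 HdY2].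
  set (d := F1 k (Y1 tau) (Y2 tau) tau) in *.
  destruct (HdY1 (- d / 2) ltac:(lra)) as [d1 [Hd1 P1]].
  assert (Hq : cont_within D01 (fun s => INR k * (1 - s) + -2 * Y2 s) tau).
  { apply cont_within_plus; [|apply cont_within_scal; eapply deriv_within_cont_within; eauto].
    apply cont_within_of_continuity_pt, continuity_pt_of_ex_derive. auto_derive. auto. }
  destruct (cont_within_pos _ _ _ Hq ltac:(lra)) as [d2 [Hd2 P2]].
  destruct (cont_within_pos _ _ _ (deriv_within_cont_within _ _ _ _ HdY2) HY2)
    as [d3 [Hd3 P3]].
  set (m := Rmin (Rmin d1 d2) (Rmin d3 (1 - tau))).
  assert (Hm : 0 < m) by (unfold m; repeat apply Rmin_pos; lra).
  assert (Hmb : m <= d1 /\ m <= d2 /\ m <= d3 /\ m <= 1 - tau).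
  { unfold m. pose proof (Rmin_l (Rmin d1 d2) (Rmin d3 (1 - tau))).
    pose proof (Rmin_r (Rmin d1 d2) (Rmin d3 (1 - tau))).
    pose proof (Rmin_l d1 d2). pose proof (Rmin_r d1 d2).
    pose proof (Rmin_l d3 (1 - tau)). pose proof (Rmin_r d3 (1 - tau)). lra. }
  exists (m / 2). split; [lra|split; [lra|]]. intros t Ht.
  assert (Dt : D01 t) by (unfold D01; lra).
  assert (Hdist : Rabs (t - tau) < m) by (rewrite Rabs_right; lra).
  specialize (P1 t Dt ltac:(lra)). specialize (P2 t Dt ltac:(lra)).
  specialize (P3 t Dt ltac:(lra)).
  rewrite (Rabs_right (t - tau)), HY1 in P1 by lra.
  pose proof (Rle_abs (Y1 t - 0 - d * (t - tau))).
  repeat split; nra.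
Qed.

Section Phase_two.

Variables (k : nat) (Y1 Y2 : R -> R) (a b : R).
Hypotheses (Ha : 0 <= a) (Hb : b < 1) (Hode : solves_ode k Y1 Y2)
  (Hregion : forall t, a <= t <= b -> Y1 t <= 0 /\ 0 < Y2 t /\ 2 * Y2 t < INR k * (1 - t)).

Let Dab (t : R) : Prop := a <= t <= b.

Let lam2 (t : R) : R := lam_of (INR k * (1 - t) / Y2 t).

Let dpsi_lam2 (t : R) : R :=
  dpsi (lam2 t) * (/ df1 (lam2 t) * (- INR k / Y2 t
                   + INR k * (1 - t) * ((INR k - 1) * psi (lam2 t) / (Y2 t * Y2 t)))).

Lemma Dab_D01 t : Dab t -> D01 t.
Proof. unfold Dab, D01. lra. Qed.

Lemma lam2_arg_gt_2 t : Dab t -> 2 < INR k * (1 - t) / Y2 t.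
Proof. intro Ht. destruct (Hregion t Ht) as [_ [H1 H2]]. apply Rlt_div_r; lra. Qed.

Lemma lam2_pos t : Dab t -> 0 < lam2 t.
Proof. intro Ht. apply lam_of_spec, lam2_arg_gt_2, Ht. Qed.

Lemma F_on_phase_two t : Dab t ->
  F1 k (Y1 t) (Y2 t) t = -1 + (INR k - 1) * psi (lam2 t) /\
  F2 k (Y1 t) (Y2 t) t = - ((INR k - 1) * psi (lam2 t)).
Proof. intro Ht. destruct (Hregion t Ht) as [H1 [H2 H3]]. apply F_phase_two; auto. Qed.

Lemma ode_on_phase_two t : Dab t ->
  deriv_within Dab Y1 (F1 k (Y1 t) (Y2 t) t) t /\
  deriv_within Dab Y2 (F2 k (Y1 t) (Y2 t) t) t.
Proof.
  intro Ht. destruct (Hode t (Dab_D01 t Ht)) as [H1 H2].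
  split; apply (deriv_within_subset D01); auto using Dab_D01.
Qed.

Lemma psi_lam2_deriv x : Dab x -> deriv_within Dab (fun t => psi (lam2 t)) (dpsi_lam2 x) x.
Proof.
  intro Hx. destruct (Hregion x Hx) as [_ [Hy2 _]]. destruct (ode_on_phase_two x Hx) as [_ HdY2].
  pose proof (df1_pos _ (lam2_pos x Hx)).
  assert (HdN : derivable_pt_lim (fun s => INR k * (1 - s)) x (- INR k))
    by (solve_derive; [auto|ring]).
  pose proof (deriv_within_mult _ _ _ _ _ x (deriv_within_of_derivable_pt_lim Dab _ _ x HdN)
                (deriv_within_inv Dab Y2 _ x ltac:(lra) HdY2)) as Harg.
  pose proof (deriv_within_comp _ psi _ _ _ x
      (deriv_within_comp _ lam_of _ _ _ x Harg (lam_of_derivable_pt_lim _ (lam2_arg_gt_2 x Hx)))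
      (psi_derivable_pt_lim _ (lam2_pos x Hx))) as Hd.
  eapply deriv_within_val; [|exact Hd].
  rewrite (proj2 (F_on_phase_two x Hx)). unfold dpsi_lam2, lam2, Rdiv in *. field. split; lra.
Qed.

Lemma dpsi_lam2_cont x : Dab x -> cont_within Dab dpsi_lam2 x.
Proof.
  intro Hx. destruct (Hregion x Hx) as [_ [Hy2 _]].
  pose proof (lam2_pos x Hx) as Hl. pose proof (df1_pos _ Hl).
  assert (cY2 : cont_within Dab Y2 x)
    by (eapply deriv_within_cont_within, (proj2 (ode_on_phase_two x Hx))).
  assert (cN : cont_within Dab (fun t => INR k * (1 - t)) x).
  { apply cont_within_of_continuity_pt, continuity_pt_of_ex_derive. auto_derive. auto. }
  assert (cI : cont_within Dab (fun t => / Y2 t) x) by (apply cont_within_inv; auto; lra).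
  assert (clam : cont_within Dab lam2 x).
  { apply (cont_within_comp _ lam_of (fun t => INR k * (1 - t) * / Y2 t)).
    - apply cont_within_mult; auto.
    - apply lam_of_continuity_pt, lam2_arg_gt_2, Hx. }
  assert (cpsi := cont_within_comp _ psi lam2 x clam (psi_continuity_pt _ Hl)).
  assert (cdpsi := cont_within_comp _ dpsi lam2 x clam (dpsi_continuity_pt _ Hl)).
  assert (cdf1 : cont_within Dab (fun t => / df1 (lam2 t)) x).
  { apply cont_within_inv; [lra|]. apply cont_within_comp; auto using df1_continuity_pt. }
  assert (cI2 : cont_within Dab (fun t => / (Y2 t * Y2 t)) x).
  { apply cont_within_inv; [nra|]. apply cont_within_mult; auto. }
  unfold dpsi_lam2, Rdiv.
  repeat first [assumption | apply cont_within_const | apply cont_within_mult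
               | apply cont_within_plus].
Qed.

Lemma Y1_C2_on_phase_two : C2_on a b Y1.
Proof.
  exists (fun t => F1 k (Y1 t) (Y2 t) t), (fun t => (INR k - 1) * dpsi_lam2 t).
  intros x Hx. split; [|split].
  - apply (ode_on_phase_two x Hx).
  - apply (deriv_within_ext _ (fun t => -1 + (INR k - 1) * psi (lam2 t))).
    + intros t Ht. symmetry. apply (F_on_phase_two t Ht).
    + symmetry. apply (F_on_phase_two x Hx).
    + eapply deriv_within_val; [|apply deriv_within_plus;
        [apply deriv_within_const|apply deriv_within_scal, psi_lam2_deriv, Hx]].
      ring.
  - apply cont_within_scal, dpsi_lam2_cont, Hx.
Qed.

Lemma Y2_C2_on_phase_two : C2_on a b Y2.
Proof.
  exists (fun t => F2 k (Y1 t) (Y2 t) t), (fun t => - (INR k - 1) * dpsi_lam2 t).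
  intros x Hx. split; [|split].
  - apply (ode_on_phase_two x Hx).
  - apply (deriv_within_ext _ (fun t => - (INR k - 1) * psi (lam2 t))).
    + intros t Ht. rewrite (proj2 (F_on_phase_two t Ht)). ring.
    + rewrite (proj2 (F_on_phase_two x Hx)). ring.
    + apply deriv_within_scal, psi_lam2_deriv, Hx.
  - apply cont_within_scal, dpsi_lam2_cont, Hx.
Qed.

End Phase_two.

(** * The critical value [rho_k] *)

Lemma lambda_k_spec k : (3 <= k)%nat -> 0 < lambda_k k /\ f1 (lambda_k k) = INR k.
Proof.
  intro Hk. pose proof (INR_ge_3 k Hk). unfold lambda_k. apply epsilon_spec.
  apply f1_surj. lra.
Qed.

Lemma lam_of_INR k : (3 <= k)%nat -> lam_of (INR k) = lambda_k k.
Proof.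
  intro Hk. destruct (lambda_k_spec k Hk) as [H1 H2]. rewrite <- H2. apply lam_of_f1; auto.
Qed.

(* The cubic Taylor bound shows [f1 a < k] at [a = k (k - 2) / (k - 1)]. *)
Lemma lambda_k_gt k : (3 <= k)%nat -> INR k * (INR k - 2) / (INR k - 1) < lambda_k k.
Proof.
  intro Hk. pose proof (INR_ge_3 k Hk) as HK. destruct (lambda_k_spec k Hk) as [Hl Hf].
  set (K := INR k) in *. set (a := K * (K - 2) / (K - 1)).
  assert (HKa : K - a = K / (K - 1)) by (unfold a; field; lra).
  assert (Ha : K - 3/2 <= a) by (unfold a; apply Rle_div_r; nra).
  assert (Hfa : f1 a < K).
  { pose proof (exp_gt_taylor3 a ltac:(lra)). pose proof (exp_sub_1_sub_pos a ltac:(lra)).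
    unfold f1. apply Rlt_div_l; [lra|].
    assert (exp a - 1 > (K - 1) * a).
    { assert (1 + a / 2 + a^2 / 6 > K - 1) by nra.
      assert (a + a^2/2 + a^3/6 > (K - 1) * a) by nra. lra. }
    assert (K * a = (K - a) * ((K - 1) * a)) by (rewrite HKa; field; lra).
    assert (0 < K - a) by (rewrite HKa; apply Rdiv_lt_0_compat; lra).
    nra. }
  apply Rnot_le_lt. intros [Hlt|Heq].
  - pose proof (f1_increasing _ _ Hl Hlt). lra.
  - rewrite Heq in Hf. lra.
Qed.

Lemma lambda_k_lt k : (3 <= k)%nat -> (INR k - 1) * lambda_k k < exp (lambda_k k) - 1.
Proof.
  intro Hk. pose proof (INR_ge_3 k Hk) as HK. destruct (lambda_k_spec k Hk) as [Hl Hf].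
  pose proof (lambda_k_gt k Hk) as Hgt. pose proof (f1_gt_id _ Hl) as Hid.
  set (K := INR k) in *. set (l := lambda_k k) in *.
  pose proof (exp_sub_1_sub_pos l Hl). unfold f1 in Hf, Hid.
  assert (Hrel : (K - l) * (exp l - 1) = K * l) by (rewrite <- Hf; field; lra).
  assert ((K - 1) * (K - l) < K) by (apply Rlt_div_l in Hgt; [nra|lra]).
  assert (0 < K - l) by (rewrite <- Hf; lra).
  nra.
Qed.

Lemma expm1_gt_beyond_lambda_k k c : (3 <= k)%nat -> lambda_k k <= c ->
  (INR k - 1) * c < exp c - 1.
Proof.
  intros Hk Hc. pose proof (lambda_k_lt k Hk). destruct (lambda_k_spec k Hk) as [Hl Hf].
  pose proof (f1_lt_2_add _ Hl) as Hlt. rewrite Hf in Hlt.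
  pose proof (exp_ineq1 (lambda_k k) ltac:(lra)).
  enough (exp (lambda_k k) - 1 - (INR k - 1) * lambda_k k <= exp c - 1 - (INR k - 1) * c)
    by lra.
  apply (le_of_derive_nonneg (fun z => exp z - 1 - (INR k - 1) * z)
           (fun z => exp z - (INR k - 1))); auto.
  - intros z _. solve_derive; [auto|ring].
  - intros z Hz. assert (exp (lambda_k k) <= exp z) by (apply Rlt_le, exp_increasing; lra).
    lra.
Qed.

Definition ln_gk (k : nat) (x : R) : R :=
  ln (INR k) + (INR k - 1) * ln (1 - exp (- x)) - ln x.

Lemma gk_exp_ln_gk k x : (3 <= k)%nat -> 0 < x -> gk k x = exp (ln_gk k x).
Proof.
  intros Hk Hx. pose proof (INR_ge_3 k Hk).
  destruct (one_sub_exp_opp_bounds x Hx) as [[H1 H2] _].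
  pose proof (pow_lt (1 - exp (- x)) (k - 1) H1).
  rewrite <- (exp_ln (gk k x)) by (apply gk_pos; auto; lia). f_equal.
  unfold gk, ln_gk, Rdiv.
  rewrite ln_mult, ln_mult, ln_Rinv, ln_pow, minus_INR by (auto; try lia; try lra;
    try apply Rinv_0_lt_compat; auto; apply Rmult_lt_0_compat; lra).
  simpl (INR 1). ring.
Qed.

Lemma gk_decreasing k x y : (3 <= k)%nat -> lambda_k k <= x -> x < y -> gk k y < gk k x.
Proof.
  intros Hk Hx Hxy. destruct (lambda_k_spec k Hk) as [Hl _].
  rewrite !gk_exp_ln_gk by (auto; lra). apply exp_increasing.
  enough (- ln_gk k x < - ln_gk k y) by lra.
  apply (lt_of_derive_pos (fun z => - ln_gk k z)
           (fun z => / z - (INR k - 1) / (exp z - 1))); auto.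
  - intros c Hc. pose proof (exp_sub_1_pos c ltac:(lra)).
    destruct (one_sub_exp_opp_bounds c ltac:(lra)) as [[H1 H2] _].
    unfold ln_gk. solve_derive; [repeat split; lra|].
    pose proof (exp_pos c). rewrite exp_Ropp. field. repeat split; lra.
  - intros c Hc. pose proof (expm1_gt_beyond_lambda_k k c Hk ltac:(lra)).
    pose proof (exp_sub_1_pos c ltac:(lra)).
    enough ((INR k - 1) / (exp c - 1) < / c) by lra.
    replace ((INR k - 1) / (exp c - 1)) with ((INR k - 1) * c / (exp c - 1) * / c)
      by (field; lra).
    rewrite <- (Rmult_1_l (/ c)) at 2.
    apply Rmult_lt_compat_r; [apply Rinv_0_lt_compat; lra|].
    apply Rlt_div_l; lra.
Qed.

Lemma rho_k_pos k : (3 <= k)%nat -> 0 < rho_k k.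
Proof. intro Hk. apply gk_pos; [lia|apply lambda_k_spec; auto]. Qed.

Lemma rho_k_le_rho_max k : (3 <= k)%nat -> rho_k k <= rho_max k.
Proof. intro Hk. apply rho_max_spec, lambda_k_spec; auto. Qed.

Lemma largest_solution_rho_k k L : (3 <= k)%nat -> 0 < L -> gk k L = rho_k k ->
  (forall x, 0 < x -> rho_k k <= gk k x -> x <= L) -> L = lambda_k k.
Proof.
  intros Hk HL HgL Hmax. destruct (lambda_k_spec k Hk) as [Hl _].
  assert (lambda_k k <= L) by (apply Hmax; auto; unfold rho_k; lra).
  destruct H as [Hlt|]; auto.
  pose proof (gk_decreasing k _ _ Hk (Rle_refl _) Hlt). unfold rho_k in HgL. lra.
Qed.

Lemma lambda_k_largest_solution k : (3 <= k)%nat ->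
  forall x, 0 < x -> rho_k k <= gk k x -> x <= lambda_k k.
Proof.
  intro Hk. destruct (gk_largest_solution k (rho_k k) Hk (rho_k_pos k Hk) (rho_k_le_rho_max k Hk))
    as [L [HL [HgL Hmax]]].
  rewrite <- (largest_solution_rho_k k L); auto.
Qed.

Section Critical_rho.

Variables (k : nat) (y1 y2 : R -> R -> R).
Hypotheses (Hk : (3 <= k)%nat) (Hsol : is_y_solution k y1 y2).

Let thk := theta_star k (rho_k k).

Lemma theta_star_rho_k : thk = theta_of k (lambda_k k).
Proof.
  apply theta_star_eq; auto using rho_k_pos, lambda_k_largest_solution.
  apply lambda_k_spec; auto.
Qed.

Lemma theta_star_rho_k_bounds : 0 < thk < 1.
Proof. rewrite theta_star_rho_k. apply theta_of_bounds; [lia|apply lambda_k_spec; auto]. Qed.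

Lemma y_at_theta_star_rho_k : y1 thk (rho_k k) = 0 /\ y2 thk (rho_k k) = 1 - thk.
Proof.
  destruct (lambda_k_spec k Hk) as [Hl Hf]. pose proof (INR_ge_3 k Hk).
  pose proof (lambda_k_largest_solution k Hk).
  rewrite theta_star_rho_k. split.
  - apply (y1_at_theta_of k y1 y2); auto using rho_k_pos.
  - rewrite (y2_at_theta_of k y1 y2); auto using rho_k_pos. rewrite Hf. field. lra.
Qed.

(* At [thk] the argument of [lam_of] is exactly [k], so [lam = lambda_k] and [F1 < 0]
   amounts to [(k - 1) lambda_k < e^lambda_k - 1]. *)
Lemma F_at_theta_star_rho_k_neg :
  F1 k (y1 thk (rho_k k)) (y2 thk (rho_k k)) thk < 0 /\
  F2 k (y1 thk (rho_k k)) (y2 thk (rho_k k)) thk < 0.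
Proof.
  pose proof theta_star_rho_k_bounds. pose proof (INR_ge_3 k Hk).
  destruct y_at_theta_star_rho_k as [E1 E2]. rewrite E1, E2.
  destruct (F_phase_two k 0 (1 - thk) thk ltac:(lra) ltac:(lra) ltac:(nra)) as [F1e F2e].
  rewrite F1e, F2e.
  replace (INR k * (1 - thk) / (1 - thk)) with (INR k) by (field; lra).
  rewrite lam_of_INR by auto.
  destruct (lambda_k_spec k Hk) as [Hl _].
  pose proof (lambda_k_lt k Hk). pose proof (exp_sub_1_pos _ Hl). unfold psi.
  assert (0 < lambda_k k / (exp (lambda_k k) - 1)) by (apply Rdiv_lt_0_compat; lra).
  assert ((INR k - 1) * (lambda_k k / (exp (lambda_k k) - 1)) < 1).
  { replace ((INR k - 1) * (lambda_k k / (exp (lambda_k k) - 1)))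
      with ((INR k - 1) * lambda_k k / (exp (lambda_k k) - 1)) by (field; lra).
    apply Rlt_div_l; lra. }
  split; nra.
Qed.

Lemma y_C2_before_theta_star_rho_k :
  C2_on 0 thk (fun t => y1 t (rho_k k)) /\ C2_on 0 thk (fun t => y2 t (rho_k k)).
Proof.
  pose proof theta_star_rho_k_bounds. destruct (lambda_k_spec k Hk) as [Hl _].
  pose proof (explicit_until_theta_of k y1 y2 (rho_k k) (lambda_k k) Hk Hsol (rho_k_pos k Hk) Hl
                (lambda_k_largest_solution k Hk)) as Hagree.
  rewrite <- theta_star_rho_k in Hagree.
  split; [apply (C2_on_of_agree _ (y1_explicit k (rho_k k)))
         |apply (C2_on_of_agree _ (y2_explicit k (rho_k k)))];
    auto using y1_explicit_C2, y2_explicit_C2; try lra; intros t Ht; apply Hagree, Ht.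
Qed.

Lemma y_C2_after_theta_star_rho_k : exists eps, 0 < eps /\
  C2_on thk (thk + eps) (fun t => y1 t (rho_k k)) /\
  C2_on thk (thk + eps) (fun t => y2 t (rho_k k)).
Proof.
  pose proof theta_star_rho_k_bounds. pose proof (INR_ge_3 k Hk).
  destruct y_at_theta_star_rho_k as [E1 E2].
  pose proof (solves_ode_of_is_y_solution k y1 y2 _ Hsol (rho_k_pos k Hk)) as Hode.
  destruct (phase_two_after k _ _ thk ltac:(lra) Hode E1 ltac:(lra) ltac:(nra)
              (proj1 F_at_theta_star_rho_k_neg)) as [eps [Heps [Hlt1 Hregion]]].
  exists eps. split; [auto|split].
  - apply (Y1_C2_on_phase_two k _ (fun t => y2 t (rho_k k))); auto. lra.
  - apply (Y2_C2_on_phase_two k (fun t => y1 t (rho_k k))); auto. lra.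
Qed.

End Critical_rho.

Theorem proposition3p3 (k : nat) (y1 y2 : R -> R -> R) :
  (3 <= k)%nat ->
  is_y_solution k y1 y2 ->
  (* (a) *)
  (forall rho, rho_max k < rho -> theta_star k rho = 1) /\
  (forall rho, 0 < rho -> rho <= rho_max k ->
     exists lam,
       (0 < lam /\ gk k lam = rho /\
        (forall mu, 0 < mu -> gk k mu = rho -> mu <= lam)) /\
       theta_star k rho = 1 - (1 - exp (- lam)) ^ k /\
       y2 (theta_star k rho) rho = INR k / f1 lam * (1 - theta_star k rho)) /\
  (* (b) *)
  (let thk := theta_star k (rho_k k) in
   (* (I) *)
   (y2 thk (rho_k k) = 1 - thk /\ 0 < 1 - thk) /\
   (* (II) *)
   (exists d1 d2,
      deriv_within (fun t => 0 <= t < 1) (fun t => y1 t (rho_k k)) d1 thk /\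
      deriv_within (fun t => 0 <= t < 1) (fun t => y2 t (rho_k k)) d2 thk /\
      d1 < 0 /\ d2 < 0) /\
   (* (III) *)
   (exists eps, 0 < eps /\
      C2_on 0 thk (fun t => y1 t (rho_k k)) /\
      C2_on 0 thk (fun t => y2 t (rho_k k)) /\
      C2_on thk (thk + eps) (fun t => y1 t (rho_k k)) /\
      C2_on thk (thk + eps) (fun t => y2 t (rho_k k)))).
Proof.
  intros Hk Hsol.
  split; [intros rho; apply theta_star_above_rho_max; auto|].
  split; [intros rho; apply (theta_star_below_rho_max k y1 y2); auto|].
  intro thk. pose proof (theta_star_rho_k_bounds k Hk) as Hthk.
  split; [split; [apply (y_at_theta_star_rho_k k y1 y2 Hk Hsol)|fold thk in Hthk; lra]|].
  split.
  - destruct (F_at_theta_star_rho_k_neg k y1 y2 Hk Hsol) as [HF1 HF2].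
    exists (F1 k (y1 thk (rho_k k)) (y2 thk (rho_k k)) thk),
           (F2 k (y1 thk (rho_k k)) (y2 thk (rho_k k)) thk).
    destruct (solves_ode_of_is_y_solution k y1 y2 _ Hsol (rho_k_pos k Hk) thk) as [Hd1 Hd2];
      [fold thk in Hthk; lra|].
    auto.
  - destruct (y_C2_before_theta_star_rho_k k y1 y2 Hk Hsol) as [C1 C2].
    destruct (y_C2_after_theta_star_rho_k k y1 y2 Hk Hsol) as [eps [Heps [C3 C4]]].
    exists eps. auto.
Qed.
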